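(* Let $n\ge 2$ be an integer, $k,c_b>0$, $\rho_0>0$, and let $\lambda_{1,0},\dots,\lambda_{n,0}$ be real numbers with $\lambda_{1,0}=\cdots=\lambda_{J,0}<\lambda_{J+1,0}\le\cdots\le\lambda_{n,0}$ for some integer $1\le J\le n$. Consider the system $$\lambda_i'=-\lambda_i^2+\frac{k}{n}(\rho-c_b)\ (i=1,\dots,n),\qquad \rho'=-\rho\lambda,\quad \lambda=\sum_{i=1}^n\lambda_i,\qquad \rho(0)=\rho_0,\ \lambda_i(0)=\lambda_{i,0},$$ suppose its maximal interval of existence is $[0,t_B)$ with $0<t_B<\infty$, and let $u_i(t)=e^{\int_0^t\lambda_i(s)\,ds}$. Then for every $J<j\le n$ the functions $u_1'u_j$ and $u_1u_j'$ are bounded on $[0,t_B)$, and $\lim_{t\to t_B^-}u_1(t)u_j(t)=0$.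
   Context: Solutions are real-valued and continuously differentiable on $[0,t_B)$. *)

From Stdlib Require Import Reals.
From Coquelicot Require Import Coquelicot.
Open Scope R_scope.

(* Indices of lambda run over 1..n (lam : nat -> R -> R; values at other indices irrelevant). *)
Definition lam_sum (n : nat) (lam : nat -> R -> R) (t : R) : R :=
  sum_f_R0 (fun i => lam (S i) t) (pred n).

Definition is_sol (n : nat) (k cb rho0 : R) (lam0 : nat -> R) (T : R)
    (lam : nat -> R -> R) (rho : R -> R) : Prop :=
  rho 0 = rho0 /\
  (forall i, (1 <= i <= n)%nat -> lam i 0 = lam0 i) /\
  filterlim rho (at_right 0) (locally rho0) /\
  (forall i, (1 <= i <= n)%nat -> filterlim (lam i) (at_right 0) (locally (lam0 i))) /\
  (forall t, 0 < t < T ->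
     (forall i, (1 <= i <= n)%nat ->
        is_derive (lam i) t (- (lam i t) ^ 2 + k / INR n * (rho t - cb))) /\
     is_derive rho t (- rho t * lam_sum n lam t)).

Definition maximal_sol (n : nat) (k cb rho0 : R) (lam0 : nat -> R) (tB : R)
    (lam : nat -> R -> R) (rho : R -> R) : Prop :=
  is_sol n k cb rho0 lam0 tB lam rho /\
  forall T, tB < T ->
    ~ (exists (lam' : nat -> R -> R) (rho' : R -> R),
          is_sol n k cb rho0 lam0 T lam' rho' /\
          forall t, 0 <= t < tB ->
            rho' t = rho t /\ forall i, (1 <= i <= n)%nat -> lam' i t = lam i t).

Definition u (lam : nat -> R -> R) (i : nat) (t : R) : R :=
  exp (RInt (lam i) 0 t).

Definition bounded_on_0_tB (tB : R) (f : R -> R) : Prop :=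
  exists M, forall t, 0 <= t < tB -> Rabs (f t) <= M.

From Stdlib Require Import Reals Lra Lia Psatz Classical.
From Coquelicot Require Import Coquelicot.
Open Scope R_scope.

(* Each [u_i = exp (int lambda_i)] solves the same linear equation [u'' = (k/n) (rho - cb) u], so
   the Wronskian [u_1 u_j' - u_1' u_j] is the constant [lambda_j0 - lambda_10 > 0]; in particular
   [lambda_1 <= lambda_i], and [rho = rho0 exp (- sum int lambda_i) > 0] keeps the coefficient
   above [- k cb / n].

   If [u_1] stayed away from [0] near [tB], then [rho <= rho0 u_1^-n] would be bounded, the
   Riccati equations would bound every [lambda_i] from above, and [u_1'' >= - (k cb / n) u_1] would
   bound [lambda_1 = u_1' / u_1] from below. A bounded solution extends beyond [tB] (local
   existence for a time depending only on the bound, and uniqueness), contradicting maximality.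

   So [inf u_1 = 0] near [tB]. Sturm comparison with a cosine then shows [u_1' <= 0] near [tB],
   so [u_1] decreases to [0] at most linearly, [(u_j / u_1)' = W / u_1^2] is not integrable and
   [u_j / u_1 -> +oo]; this forces [u_1 u_j = u_1^2 (u_j / u_1) -> 0]. Finally [u_1' u_j <= 0] is
   bounded below through a barrier argument for [u_1 u_j'], and [u_1 u_j' = u_1' u_j + W]. *)

(** * Calculus on the real line *)

(* Coquelicot's rules are stated with [plus], [mult], [zero], [one]; these instances unify with
   [Rplus], [Rmult], [0], [1] under [apply]. *)
Lemma is_derive_Rplus (f g : R -> R) (x df dg : R) : is_derive f x df -> is_derive g x dg ->
  is_derive (fun t => f t + g t) x (df + dg).
Proof. exact (is_derive_plus f g x df dg). Qed.

Lemma is_derive_Rminus (f g : R -> R) (x df dg : R) : is_derive f x df -> is_derive g x dg ->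
  is_derive (fun t => f t - g t) x (df - dg).
Proof. exact (is_derive_minus f g x df dg). Qed.

Lemma is_derive_Rmult (f g : R -> R) (x df dg : R) : is_derive f x df -> is_derive g x dg ->
  is_derive (fun t => f t * g t) x (df * g x + f x * dg).
Proof. intros Hf Hg. exact (is_derive_mult f g x df dg Hf Hg Rmult_comm). Qed.

Lemma is_derive_Rexp (f : R -> R) (x df : R) : is_derive f x df ->
  is_derive (fun t => exp (f t)) x (df * exp (f x)).
Proof.
  intros Hf. apply (is_derive_comp exp f); [|exact Hf].
  apply is_derive_Reals, derivable_pt_lim_exp.
Qed.

Lemma is_derive_Rconst (c x : R) : is_derive (fun _ => c) x 0.
Proof. exact (is_derive_const c x). Qed.

Lemma is_derive_Rid (x : R) : is_derive (fun t => t) x 1.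
Proof. exact (is_derive_id x). Qed.

Lemma is_derive_Rlin (c x : R) : is_derive (fun t => c * t) x c.
Proof. auto_derive; [trivial | ring]. Qed.

Lemma is_derive_eq (f : R -> R) (x l l' : R) : is_derive f x l -> l = l' -> is_derive f x l'.
Proof. now intros H <-. Qed.

Lemma exp_le_of_le x y : x <= y -> exp x <= exp y.
Proof. intros [H| ->]; [left; apply exp_increasing, H | right; reflexivity]. Qed.

Lemma continuous_of_is_derive (f : R -> R) (x l : R) : is_derive f x l -> continuous f x.
Proof. intros H. apply (ex_derive_continuous f). now exists l. Qed.

Lemma continuous_at_eps (f : R -> R) c : continuous f c ->
  forall eps, 0 < eps -> exists del, 0 < del /\ forall y, Rabs (y - c) < del -> Rabs (f y - f c) < eps.
Proof.
  intros H eps He.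
  destruct (proj1 (filterlim_locally f (f c)) H (mkposreal eps He)) as [d Hd].
  exists d. split; [apply cond_pos | intros y Hy; exact (Hd y Hy)].
Qed.

Lemma nondecreasing_of_derive (f df : R -> R) a b : a <= b ->
  (forall x, a <= x <= b -> continuous f x) ->
  (forall x, a < x < b -> is_derive f x (df x)) ->
  (forall x, a < x < b -> 0 <= df x) -> f a <= f b.
Proof.
  intros Hab Hc Hd Hp. destruct (Req_dec a b) as [<-|Hne]; [lra|].
  assert (pr : forall c, a < c < b -> derivable_pt f c).
  { intros c Hcab. exists (df c). apply is_derive_Reals, Hd, Hcab. }
  destruct (MVT f id a b pr (fun c _ => derivable_pt_id c)) as [c [P Hmvt]]; [lra | | |].
  - intros c Hcab. apply continuity_pt_filterlim, Hc, Hcab.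
  - intros c _. apply derivable_continuous_pt, derivable_pt_id.
  - rewrite derive_pt_id, (derive_pt_eq_0 f c (df c)) in Hmvt by apply is_derive_Reals, Hd, P.
    unfold id in Hmvt. specialize (Hp c P). nra.
Qed.

Lemma nondecreasing_of_derive_closed (f df : R -> R) a b : a <= b ->
  (forall x, a <= x <= b -> is_derive f x (df x)) ->
  (forall x, a < x < b -> 0 <= df x) -> f a <= f b.
Proof.
  intros Hab Hd. apply (nondecreasing_of_derive f df a b Hab); [|intros x Hx; apply Hd; lra].
  intros x Hx. exact (continuous_of_is_derive f x _ (Hd x Hx)).
Qed.

Lemma constant_of_derive_0 (f : R -> R) a b : a <= b ->
  (forall x, a <= x <= b -> continuous f x) ->
  (forall x, a < x < b -> is_derive f x 0) -> f a = f b.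
Proof.
  intros Hab Hc Hd. apply Rle_antisym.
  - apply (nondecreasing_of_derive f (fun _ => 0) a b Hab Hc Hd). intros; lra.
  - enough (- f a <= - f b) by lra.
    apply (nondecreasing_of_derive (fun t => - f t) (fun _ => - 0) a b Hab).
    + intros x Hx. apply (continuous_opp f), Hc, Hx.
    + intros x Hx. apply (is_derive_opp f), Hd, Hx.
    + intros; lra.
Qed.

Lemma abs_sub_le_of_derive_bound (f df : R -> R) a b B : a <= b ->
  (forall x, a <= x <= b -> is_derive f x (df x)) ->
  (forall x, a <= x <= b -> Rabs (df x) <= B) ->
  Rabs (f b - f a) <= B * (b - a).
Proof.
  intros Hab Hd Hb.
  assert (B * a - f a <= B * b - f b).
  { apply (nondecreasing_of_derive_closed (fun x => B * x - f x) (fun x => B - df x) a b Hab).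
    - intros x Hx. apply is_derive_Rminus; [exact (is_derive_Rlin B x) | apply Hd, Hx].
    - intros x Hx. pose proof (Rle_abs (df x)). pose proof (Hb x ltac:(lra)). lra. }
  assert (B * a + f a <= B * b + f b).
  { apply (nondecreasing_of_derive_closed (fun x => B * x + f x) (fun x => B + df x) a b Hab).
    - intros x Hx. apply is_derive_Rplus; [exact (is_derive_Rlin B x) | apply Hd, Hx].
    - intros x Hx. pose proof (Rle_abs (- df x)) as Hn. rewrite Rabs_Ropp in Hn.
      pose proof (Hb x ltac:(lra)). lra. }
  apply Rabs_le. lra.
Qed.

(* Let [c] be the last time before [x] with [f >= m] (a supremum); on [(c, x]] we have [f < m],
   hence [f' >= 0], so [f x >= f c >= m]. *)
Lemma lower_barrier (f df : R -> R) a b m : a <= b ->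
  (forall x, a <= x <= b -> is_derive f x (df x)) ->
  (forall x, a < x < b -> f x < m -> 0 <= df x) ->
  m <= f a -> forall x, a <= x <= b -> m <= f x.
Proof.
  intros Hab Hd Hp Ha x Hx.
  destruct (Rle_or_lt m (f x)) as [H|Hfx]; [exact H|exfalso].
  set (E := fun y => a <= y <= x /\ m <= f y).
  destruct (completeness E) as [c [Hub Hlub]].
  { exists x. intros y [Hy _]. lra. }
  { exists a. split; lra. }
  assert (Hac : a <= c) by (apply Hub; split; lra).
  assert (Hcx : c <= x) by (apply Hlub; intros y [Hy _]; lra).
  assert (Hfc : m <= f c).
  { destruct (Rle_or_lt m (f c)) as [H|H]; [exact H|exfalso].
    destruct (Req_dec c a) as [->|Hca]; [lra|].
    destruct (continuous_at_eps f c (continuous_of_is_derive f c _ (Hd c ltac:(lra))) (m - f c))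
      as [d [Hd0 Hd1]]; [lra|].
    enough (c <= c - d / 2) by lra.
    apply Hlub. intros y [Hy1 Hy2].
    destruct (Rle_or_lt y (c - d / 2)) as [H'|H']; [exact H'|].
    assert (y <= c) by (apply Hub; split; auto).
    assert (Hy : Rabs (f y - f c) < m - f c) by (apply Hd1; apply Rabs_def1; lra).
    apply Rabs_def2 in Hy. lra. }
  assert (Hcx' : c < x) by (destruct (Req_dec c x) as [->|]; lra).
  assert (Hbelow : forall y, c < y <= x -> f y < m).
  { intros y Hy. destruct (Rle_or_lt m (f y)) as [H|H]; [|exact H].
    assert (y <= c) by (apply Hub; split; [lra|exact H]). lra. }
  enough (f c <= f x) by lra.
  apply (nondecreasing_of_derive_closed f df c x); [lra | intros z Hz; apply Hd; lra |].
  intros z Hz. apply Hp; [lra | apply Hbelow; lra].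
Qed.

(* Above [A + 1], [g' = h - g^2 < 0]: either [g >= 1] and [g^2 >= g > A + 1 > h], or [A < 0]. *)
Lemma riccati_upper_bound (g h : R -> R) a b A : a <= b ->
  (forall x, a <= x <= b -> is_derive g x (- g x ^ 2 + h x)) ->
  (forall x, a < x < b -> h x <= A) ->
  forall x, a <= x <= b -> g x <= Rmax (g a) (A + 1).
Proof.
  intros Hab Hd Hh x Hx.
  pose proof (Rmax_l (g a) (A + 1)). pose proof (Rmax_r (g a) (A + 1)).
  enough (- Rmax (g a) (A + 1) <= - g x) by lra.
  apply (lower_barrier (fun t => - g t) (fun t => - (- g t ^ 2 + h t)) a b _ Hab); [| |lra|exact Hx].
  - intros t Ht. apply (is_derive_opp g), Hd, Ht.
  - intros t Ht Hlt. pose proof (Hh t Ht).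
    destruct (Rle_or_lt 1 (g t)); simpl; nra.
Qed.

(* [Q = x' z - x z'] satisfies [Q' = (f - g) x z >= 0] and [Q (t2) >= 0],
   so [(x / z)' = Q / z^2 >= 0]. *)
Lemma sturm_comparison (x dx z dz f g : R -> R) (t2 t : R) : t2 <= t ->
  (forall r, t2 <= r <= t ->
     is_derive x r (dx r) /\ is_derive dx r (f r * x r) /\ is_derive z r (dz r) /\
     is_derive dz r (g r * z r) /\ 0 < x r /\ 0 < z r /\ g r <= f r) ->
  x t2 = z t2 -> dz t2 <= dx t2 -> z t <= x t.
Proof.
  intros Ht Hr Hx0 Hdx0.
  set (Q := fun r => dx r * z r - x r * dz r).
  assert (HQ : forall r, t2 <= r <= t -> 0 <= Q r).
  { intros r Hrt. apply (Rle_trans _ (Q t2)).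
    - destruct (Hr t2 ltac:(lra)) as (_ & _ & _ & _ & _ & Hz & _). unfold Q. rewrite Hx0. nra.
    - apply (nondecreasing_of_derive_closed Q (fun r => (f r - g r) * x r * z r) t2 r); [lra | |].
      + intros y Hy. destruct (Hr y ltac:(lra)) as (D1 & D2 & D3 & D4 & _). unfold Q.
        apply (is_derive_eq _ _ _ _ (is_derive_Rminus _ _ _ _ _
          (is_derive_Rmult _ _ _ _ _ D2 D3) (is_derive_Rmult _ _ _ _ _ D1 D4))).
        ring.
      + intros y Hy. destruct (Hr y ltac:(lra)) as (_ & _ & _ & _ & Hx & Hz & Hfg).
        apply Rmult_le_pos; [apply Rmult_le_pos|]; lra. }
  assert (Hratio : x t2 / z t2 <= x t / z t).
  { apply (nondecreasing_of_derive_closed (fun r => x r / z r) (fun r => Q r / z r ^ 2) t2 t); [lra | |].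
    - intros r Hrt. destruct (Hr r Hrt) as (D1 & _ & D3 & _ & _ & Hz & _).
      apply (is_derive_eq _ _ _ _ (is_derive_div _ _ _ _ _ D1 D3 ltac:(lra))). unfold Q. field. lra.
    - intros r Hrt. destruct (Hr r ltac:(lra)) as (_ & _ & _ & _ & _ & Hz & _).
      apply Rdiv_le_0_compat; [apply HQ; lra | apply pow_lt; lra]. }
  destruct (Hr t2 ltac:(lra)) as (_ & _ & _ & _ & _ & Hz2 & _).
  destruct (Hr t ltac:(lra)) as (_ & _ & _ & _ & _ & Hz & _).
  rewrite Hx0, Rdiv_diag in Hratio by lra.
  apply (Rmult_le_compat_r (z t)) in Hratio; [|lra].
  replace (x t / z t * z t) with (x t) in Hratio by (field; lra). lra.
Qed.

(* Compare with [x t2 * cos (om * (r - t2))], which solves [z'' = - om^2 z]. *)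
Lemma sturm_lower_bound (x dx f : R -> R) (om t2 t : R) : 0 < om -> t2 <= t -> om * (t - t2) <= 1 ->
  (forall r, t2 <= r <= t ->
     is_derive x r (dx r) /\ is_derive dx r (f r * x r) /\ 0 < x r /\ - (om * om) <= f r) ->
  0 <= dx t2 -> x t2 * cos 1 <= x t.
Proof.
  intros Hom Ht Hw Hr Hdx.
  assert (Hx2 : 0 < x t2) by (apply (Hr t2); lra).
  assert (Hcos : forall r, t2 <= r <= t -> cos 1 <= cos (om * (r - t2)) /\ 0 < cos (om * (r - t2))).
  { intros r Hrt. pose proof PI2_1.
    assert (om * (r - t2) <= om * (t - t2)) by (apply Rmult_le_compat_l; lra).
    assert (0 <= om * (r - t2)) by (apply Rmult_le_pos; lra).
    split; [|apply cos_gt_0; lra].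
    destruct (Req_dec (om * (r - t2)) 1) as [->|Hne]; [lra|]. left. apply cos_decreasing_1; lra. }
  eapply Rle_trans; [apply Rmult_le_compat_l; [lra | apply (Hcos t); lra]|].
  apply (sturm_comparison x dx (fun r => x t2 * cos (om * (r - t2)))
           (fun r => - (x t2 * (om * sin (om * (r - t2))))) f (fun _ => - (om * om)) t2 t Ht).
  - intros r Hrt. destruct (Hr r Hrt) as (D1 & D2 & Hxr & Hf).
    split; [exact D1|]. split; [exact D2|]. split; [auto_derive; [trivial | unfold Rminus; ring]|].
    split; [auto_derive; [trivial | unfold Rminus; ring]|].
    split; [exact Hxr|]. split; [apply Rmult_lt_0_compat; [lra | apply Hcos, Hrt] | exact Hf].
  - rewrite Rminus_diag, Rmult_0_r, cos_0. ring.
  - rewrite Rminus_diag, Rmult_0_r, sin_0. lra.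
Qed.

Lemma locally_open_interval (a b t : R) : a < t < b -> locally t (fun y => a < y < b).
Proof.
  intros Ht. assert (Hd : 0 < Rmin (t - a) (b - t)) by (apply Rmin_pos; lra).
  exists (mkposreal _ Hd). intros y Hy. change (Rabs (y - t) < Rmin (t - a) (b - t)) in Hy.
  apply Rabs_def2 in Hy. pose proof (Rmin_l (t - a) (b - t)). pose proof (Rmin_r (t - a) (b - t)). lra.
Qed.

Lemma continuous_of_lipschitz (f : R -> R) a b M t : a < t < b ->
  (forall y, a < y < b -> Rabs (f y - f t) <= M * Rabs (y - t)) -> continuous f t.
Proof.
  intros Ht Hl. apply filterlim_locally. intros eps.
  assert (He : 0 < eps / (Rabs M + 1)) by (apply Rdiv_lt_0_compat; [apply cond_pos
      | pose proof (Rabs_pos M); lra]).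
  apply (filter_imp (fun y => (a < y < b) /\ Rabs (y - t) < eps / (Rabs M + 1))).
  - intros y [Hy Hyt]. change (Rabs (f y - f t) < eps). eapply Rle_lt_trans; [apply Hl, Hy|].
    pose proof (Rabs_pos M). pose proof (Rabs_pos (y - t)). pose proof (Rle_abs M).
    assert (Rabs M * Rabs (y - t) <= Rabs M * (eps / (Rabs M + 1))) by nra.
    assert (pos eps = (Rabs M + 1) * (eps / (Rabs M + 1))) by (field; lra).
    pose proof (cond_pos eps). nra.
  - apply filter_and; [apply locally_open_interval, Ht|].
    exists (mkposreal _ He). intros y Hy. exact Hy.
Qed.

Lemma lipschitz_of_derive_bound (f df : R -> R) a b B :
  (forall x, a < x < b -> is_derive f x (df x)) -> (forall x, a < x < b -> Rabs (df x) <= B) ->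
  forall x y, a < x < b -> a < y < b -> Rabs (f x - f y) <= B * Rabs (x - y).
Proof.
  intros Hd Hb x y Hx Hy. destruct (Rle_or_lt y x) as [Hxy|Hxy].
  - rewrite (Rabs_right (x - y)) by lra.
    apply (abs_sub_le_of_derive_bound f df); [lra | intros z Hz; apply Hd; lra | intros z Hz;
        apply Hb; lra].
  - rewrite Rabs_minus_sym, (Rabs_left (x - y)) by lra. replace (- (x - y)) with (y - x) by ring.
    apply (abs_sub_le_of_derive_bound f df); [lra | intros z Hz; apply Hd; lra | intros z Hz;
        apply Hb; lra].
Qed.

Lemma between_in_interval a b s t z : a < s < b -> a < t < b -> Rmin s t <= z <= Rmax s t -> a < z < b.
Proof. intros H1 H2 H3. unfold Rmin, Rmax in H3. destruct (Rle_dec s t); lra. Qed.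

Lemma ex_RInt_interval (f : R -> R) a b s t : (forall z, a < z < b -> continuous f z) ->
  a < s < b -> a < t < b -> ex_RInt f s t.
Proof.
  intros Hc Hs Ht. apply (ex_RInt_continuous f). intros z Hz.
  apply Hc, (between_in_interval a b s t z Hs Ht Hz).
Qed.

Lemma abs_RInt_le (f : R -> R) s t M : ex_RInt f s t ->
  (forall z, Rmin s t <= z <= Rmax s t -> Rabs (f z) <= M) -> Rabs (RInt f s t) <= M * Rabs (t - s).
Proof.
  intros Hex Hb. destruct (Rle_or_lt s t) as [H|H].
  - rewrite Rmin_left, Rmax_right in Hb by lra. rewrite (Rabs_right (t - s)), Rmult_comm by lra.
    apply abs_RInt_le_const; auto.
  - rewrite Rmin_right, Rmax_left in Hb by lra.
    rewrite <- (opp_RInt_swap f t s) by (apply ex_RInt_swap, Hex).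
    change (Rabs (- RInt f t s) <= M * Rabs (t - s)).
    rewrite Rabs_Ropp, (Rabs_left (t - s)), Rmult_comm by lra. replace (- (t - s)) with (s - t) by ring.
    apply abs_RInt_le_const; [lra | apply ex_RInt_swap, Hex | exact Hb].
Qed.

Lemma is_derive_RInt_interval (f : R -> R) a b s t : (forall z, a < z < b -> continuous f z) ->
  a < s < b -> a < t < b -> is_derive (fun t => RInt f s t) t (f t).
Proof.
  intros Hc Hs Ht. apply (is_derive_RInt f _ s t); [|apply Hc, Ht].
  apply (filter_imp (fun y => a < y < b)); [|apply locally_open_interval, Ht].
  intros y Hy. apply (RInt_correct f), (ex_RInt_interval f a b s y Hc Hs Hy).
Qed.

(** * Local existence and uniqueness for systems of ODEs *)

Lemma geom_eventually_lt (q C eps : R) : 0 <= q < 1 -> 0 < eps -> exists m : nat, C * q ^ m < eps.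
Proof.
  intros Hq He. destruct (Rle_or_lt C 0) as [HC|HC]; [exists 0%nat; simpl; lra|].
  destruct (pow_lt_1_zero q ltac:(rewrite Rabs_right; lra) (eps / C)) as [N HN];
    [apply Rdiv_lt_0_compat; lra|].
  exists N. specialize (HN N (le_n _)). rewrite Rabs_right in HN by (apply Rle_ge, pow_le; lra).
  apply (Rmult_lt_compat_l C) in HN; [|lra].
  replace (C * (eps / C)) with eps in HN by (field; lra). exact HN.
Qed.

Lemma eq_0_of_geom_bound (a K q : R) : 0 <= q < 1 -> (forall m, Rabs a <= K * q ^ m) -> a = 0.
Proof.
  intros Hq H. destruct (Req_dec a 0) as [|Hne]; [assumption|exfalso].
  assert (Ha : 0 < Rabs a) by (apply Rabs_pos_lt, Hne).
  destruct (geom_eventually_lt q K (Rabs a) Hq Ha) as [m Hm]. specialize (H m). lra.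
Qed.

Lemma le_of_geom_bound (a b K q : R) : 0 <= q < 1 -> (forall m, a <= b + K * q ^ m) -> a <= b.
Proof.
  intros Hq H. apply Rle_plus_epsilon. intros eps He.
  destruct (geom_eventually_lt q K eps Hq He) as [m Hm]. specialize (H m). lra.
Qed.

Lemma geom_cauchy_limit (u : nat -> R) (C q : R) : 0 <= q <= 1/2 ->
  (forall m, Rabs (u (S m) - u m) <= C * q ^ m) ->
  forall m, Rabs (real (Lim_seq u) - u m) <= 2 * C * q ^ m.
Proof.
  intros Hq Hs.
  assert (HC : 0 <= C).
  { specialize (Hs 0%nat). simpl in Hs. pose proof (Rabs_pos (u 1%nat - u 0%nat)). lra. }
  assert (Htail : forall m p, Rabs (u (m + p)%nat - u m) <= 2 * C * q ^ m * (1 - (1/2) ^ p)).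
  { intros m p. induction p as [|p IH].
    - rewrite Nat.add_0_r, Rminus_diag, Rabs_R0. simpl. lra.
    - replace (m + S p)%nat with (S (m + p)) by lia.
      pose proof (Hs (m + p)%nat) as H1. rewrite pow_add in H1.
      assert (q ^ p <= (1/2) ^ p) by (apply pow_incr; lra).
      assert (0 <= q ^ m) by (apply pow_le; lra).
      assert (C * (q ^ m * q ^ p) <= C * q ^ m * (1/2) ^ p)
        by (rewrite <- Rmult_assoc; apply Rmult_le_compat_l; [apply Rmult_le_pos|]; auto).
      replace (u (S (m + p)) - u m) with ((u (S (m + p)) - u (m + p)%nat) + (u (m + p)%nat - u m))
          by ring.
      eapply Rle_trans; [apply Rabs_triang|]. simpl pow. lra. }
  assert (Htail' : forall m p, Rabs (u (m + p)%nat - u m) <= 2 * C * q ^ m).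
  { intros m p. eapply Rle_trans; [apply Htail|].
    assert (0 <= (1/2) ^ p) by (apply pow_le; lra).
    assert (0 <= 2 * C * q ^ m) by (apply Rmult_le_pos; [lra | apply pow_le; lra]). nra. }
  assert (Hcv : ex_finite_lim_seq u).
  { apply ex_lim_seq_cauchy_corr. intros eps.
    destruct (geom_eventually_lt q (4 * C) eps ltac:(lra) (cond_pos eps)) as [N HN].
    exists N. intros a b Ha Hb.
    pose proof (Htail' N (a - N)%nat) as HA. pose proof (Htail' N (b - N)%nat) as HB.
    replace (N + (a - N))%nat with a in HA by lia. replace (N + (b - N))%nat with b in HB by lia.
    replace (u a - u b) with ((u a - u N) - (u b - u N)) by ring.
    eapply Rle_lt_trans; [apply Rabs_triang|]. rewrite Rabs_Ropp. lra. }
  destruct Hcv as [l Hl]. rewrite (is_lim_seq_unique u l Hl). simpl.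
  intros m. apply Rle_plus_epsilon. intros eps He.
  apply is_lim_seq_spec in Hl. destruct (Hl (mkposreal eps He)) as [N HN]. simpl in HN.
  specialize (HN (m + N)%nat ltac:(lia)). specialize (Htail' m N).
  replace (l - u m) with ((u (m + N)%nat - u m) - (u (m + N)%nat - l)) by ring.
  eapply Rle_trans; [apply Rabs_triang|]. rewrite Rabs_Ropp. lra.
Qed.

Definition vnorm (d : nat) (v : nat -> R) : R := sum_f_R0 (fun i => Rabs (v i)) d.

Lemma vnorm_ge_abs d v i : (i <= d)%nat -> Rabs (v i) <= vnorm d v.
Proof.
  unfold vnorm. induction d as [|d IH]; intros Hi.
  - replace i with 0%nat by lia. simpl. lra.
  - simpl. pose proof (Rabs_pos (v (S d))).
    assert (0 <= sum_f_R0 (fun i => Rabs (v i)) d) by (apply cond_pos_sum; intros; apply Rabs_pos).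
    destruct (Nat.eq_dec i (S d)) as [->|Hne]; [lra|].
    pose proof (IH ltac:(lia)). lra.
Qed.

Lemma vnorm_le d v B : (forall i, (i <= d)%nat -> Rabs (v i) <= B) -> vnorm d v <= INR (S d) * B.
Proof.
  unfold vnorm. induction d as [|d IH]; intros H.
  - simpl. rewrite Rmult_1_l. apply H. lia.
  - simpl sum_f_R0. rewrite S_INR. specialize (IH (fun i Hi => H i ltac:(lia))).
    pose proof (H (S d) ltac:(lia)). lra.
Qed.

Definition in_box (d : nat) (l v : nat -> R) : Prop :=
  forall i, (i <= d)%nat -> Rabs (v i - l i) <= 1.

Fixpoint picard_iter (F : (nat -> R) -> nat -> R) (l : nat -> R) (s : R) (m : nat) : R -> nat -> R :=
  match m with
  | O => fun _ => l
  | S m' => fun t i => l i + RInt (fun z => F (picard_iter F l s m' z) i) s t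
  end.

Definition picard_limit (F : (nat -> R) -> nat -> R) (l : nat -> R) (s t : R) (i : nat) : R :=
  real (Lim_seq (fun m => picard_iter F l s m t i)).

(* Existence time granted by [picard_local_solution] to a field bounded by [M] and
   [L]-Lipschitz on the unit box. *)
Definition picard_time (d : nat) (M L : R) : R := / (4 * INR (S d) * (M + L)).

Section LocalSolution.

Variables (d : nat) (F : (nat -> R) -> nat -> R) (l : nat -> R) (s M L : R).
Hypothesis M_pos : 0 < M.
Hypothesis L_pos : 0 < L.
Hypothesis F_bounded : forall v, in_box d l v -> forall i, (i <= d)%nat -> Rabs (F v i) <= M.
Hypothesis F_lipschitz : forall v w, in_box d l v -> in_box d l w -> forall i, (i <= d)%nat ->
  Rabs (F v i - F w i) <= L * vnorm d (fun j => v j - w j).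
(* Continuity of [F], phrased along curves to avoid a topology on [nat -> R]. *)
Hypothesis F_continuous : forall (g : R -> nat -> R) t,
  (forall i, (i <= d)%nat -> continuous (fun z => g z i) t) ->
  forall i, (i <= d)%nat -> continuous (fun z => F (g z) i) t.

Let del := picard_time d M L.
Let D := INR (S d).
Let C := D * M * del.
Let q := D * L * del.
Let iter := picard_iter F l s.
Let phi := picard_limit F l s.

Lemma picard_time_facts : 0 < del /\ 1 <= D /\ 0 <= C <= 1/4 /\ 0 <= q <= 1/4 /\ M * del <= 1/4.
Proof.
  unfold C, q.
  assert (HD : 1 <= D) by (unfold D; rewrite S_INR; pose proof (pos_INR d); lra).
  assert (Hden : 0 < 4 * D * (M + L)) by (apply Rmult_lt_0_compat; lra).
  assert (Hdel : 0 < del) by (apply Rinv_0_lt_compat, Hden).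
  assert (Hone : 4 * D * (M + L) * del = 1) by (unfold del, picard_time; fold D; field; lra).
  repeat split; try lra; nra.
Qed.

Lemma picard_iter_near m t i : s - del < t < s + del -> (i <= d)%nat ->
  Rabs (iter m t i - l i) <= M * Rabs (t - s) /\ continuous (fun z => iter m z i) t.
Proof.
  destruct picard_time_facts as [Hdel [_ [_ [_ HMd]]]].
  revert t i. induction m as [|m IH]; intros t i Ht Hi.
  - simpl. rewrite Rminus_diag, Rabs_R0. split; [apply Rmult_le_pos; [lra | apply Rabs_pos]|].
    apply continuous_const.
  - assert (Hbox : forall z, s - del < z < s + del -> in_box d l (iter m z)).
    { intros z Hz j Hj. destruct (IH z j Hz Hj) as [H1 _].
      assert (Rabs (z - s) <= del) by (apply Rabs_le; lra).
      assert (M * Rabs (z - s) <= M * del) by (apply Rmult_le_compat_l; lra). lra. }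
    assert (Hc : forall z, s - del < z < s + del -> continuous (fun z => F (iter m z) i) z).
    { intros z Hz. apply F_continuous; [|exact Hi]. intros j Hj. apply (IH z j Hz Hj). }
    assert (Hs : s - del < s < s + del) by lra.
    split.
    + change (Rabs (l i + RInt (fun z => F (iter m z) i) s t - l i) <= M * Rabs (t - s)).
      rewrite Rplus_minus_l.
      apply abs_RInt_le; [apply (ex_RInt_interval _ _ _ s t Hc Hs Ht)|].
      intros z Hz. apply F_bounded; [apply Hbox, (between_in_interval _ _ s t z Hs Ht Hz) | exact Hi].
    + apply (continuous_of_is_derive _ t (0 + F (iter m t) i)).
      apply is_derive_Rplus; [apply is_derive_Rconst
          | exact (is_derive_RInt_interval _ _ _ s t Hc Hs Ht)].
Qed.

Lemma picard_iter_in_box m t : s - del < t < s + del -> in_box d l (iter m t).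
Proof.
  destruct picard_time_facts as [_ [_ [_ [_ HMd]]]].
  intros Ht j Hj. destruct (picard_iter_near m t j Ht Hj) as [H _].
  assert (Rabs (t - s) <= del) by (apply Rabs_le; lra).
  assert (M * Rabs (t - s) <= M * del) by (apply Rmult_le_compat_l; lra). lra.
Qed.

Lemma F_picard_iter_continuous m i z : (i <= d)%nat -> s - del < z < s + del ->
  continuous (fun z => F (iter m z) i) z.
Proof.
  intros Hi Hz. apply F_continuous; [|exact Hi]. intros j Hj. apply (picard_iter_near m z j Hz Hj).
Qed.

Lemma picard_iter_derive m t i : s - del < t < s + del -> (i <= d)%nat ->
  is_derive (fun z => iter (S m) z i) t (F (iter m t) i).
Proof.
  intros Ht Hi. destruct picard_time_facts as [Hdel _].
  apply (is_derive_eq _ _ (0 + F (iter m t) i)); [|ring].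
  apply is_derive_Rplus; [apply is_derive_Rconst|].
  apply (is_derive_RInt_interval (fun z => F (iter m z) i) (s - del) (s + del)); [| lra | exact Ht].
  intros z Hz. apply F_picard_iter_continuous; assumption.
Qed.

Lemma picard_iter_contraction m t : s - del < t < s + del ->
  vnorm d (fun i => iter (S m) t i - iter m t i) <= C * q ^ m.
Proof.
  destruct picard_time_facts as [Hdel [HD [HDM [HDL HMd]]]].
  assert (Hs : s - del < s < s + del) by lra.
  revert t. induction m as [|m IH]; intros t Ht.
  - simpl pow. rewrite Rmult_1_r. unfold C. rewrite Rmult_assoc. apply vnorm_le. intros i Hi.
    destruct (picard_iter_near 1 t i Ht Hi) as [H1 _].
    assert (Rabs (t - s) <= del) by (apply Rabs_le; lra).
    assert (M * Rabs (t - s) <= M * del) by (apply Rmult_le_compat_l; lra).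
    change (iter 0 t i) with (l i). lra.
  - replace (C * q ^ S m) with (D * (L * (C * q ^ m) * del)) by (unfold q; simpl; ring).
    apply vnorm_le. intros i Hi.
    assert (Hc : forall k z, s - del < z < s + del -> continuous (fun z => F (iter k z) i) z)
      by (intros k z Hz; apply F_picard_iter_continuous; assumption).
    change (iter (S (S m)) t i - iter (S m) t i) with
      ((l i + RInt (fun z => F (iter (S m) z) i) s t) - (l i + RInt (fun z => F (iter m z) i) s t)).
    rewrite Rminus_plus_l_l.
    rewrite <- (RInt_minus (fun z => F (iter (S m) z) i) (fun z => F (iter m z) i))
      by (apply (ex_RInt_interval _ _ _ s t (Hc _) Hs Ht)).
    eapply Rle_trans; [apply abs_RInt_le|].
    + apply (ex_RInt_interval _ (s - del) (s + del) s t); [|exact Hs|exact Ht].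
      intros z Hz. apply (continuous_minus (fun z => F (iter (S m) z) i) (fun z => F (iter m z) i));
        apply Hc, Hz.
    + intros z Hz. assert (Hz' := between_in_interval _ _ s t z Hs Ht Hz).
      eapply Rle_trans; [apply F_lipschitz; [apply picard_iter_in_box, Hz' .. | exact Hi]|].
      apply Rmult_le_compat_l; [lra | apply IH, Hz'].
    + assert (Rabs (t - s) <= del) by (apply Rabs_le; lra).
      apply Rmult_le_compat_l; [|exact H].
      assert (0 <= q ^ m) by (apply pow_le; lra).
      apply Rmult_le_pos; [lra | apply Rmult_le_pos; lra].
Qed.

Lemma picard_limit_approx m t i : s - del < t < s + del -> (i <= d)%nat ->
  Rabs (phi t i - iter m t i) <= 2 * C * q ^ m.
Proof.
  intros Ht Hi. destruct picard_time_facts as [Hdel [HD [HDM [HDL HMd]]]].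
  apply (geom_cauchy_limit (fun k => iter k t i)); [lra|].
  intros k. eapply Rle_trans; [|apply (picard_iter_contraction k t Ht)].
  exact (vnorm_ge_abs d (fun i => iter (S k) t i - iter k t i) i Hi).
Qed.

Lemma picard_iter_lipschitz m t t' i : s - del < t < s + del -> s - del < t' < s + del -> (i <= d)%nat ->
  Rabs (iter m t i - iter m t' i) <= M * Rabs (t - t').
Proof.
  intros Ht Ht' Hi. destruct m as [|m].
  - simpl. rewrite Rminus_diag, Rabs_R0. apply Rmult_le_pos; [lra | apply Rabs_pos].
  - apply (lipschitz_of_derive_bound (fun z => iter (S m) z i) (fun z => F (iter m z) i) (s - del)
      (s + del));
      [| |exact Ht|exact Ht'].
    + intros x Hx. apply picard_iter_derive; assumption.
    + intros x Hx. apply F_bounded; [apply picard_iter_in_box, Hx | exact Hi].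
Qed.

Lemma picard_limit_lipschitz t t' i : s - del < t < s + del -> s - del < t' < s + del -> (i <= d)%nat ->
  Rabs (phi t i - phi t' i) <= M * Rabs (t - t').
Proof.
  intros Ht Ht' Hi. destruct picard_time_facts as [Hdel [HD [HDM [HDL HMd]]]].
  apply (le_of_geom_bound _ _ (4 * C) q); [lra|].
  intros m.
  pose proof (picard_limit_approx m t i Ht Hi). pose proof (picard_limit_approx m t' i Ht' Hi).
  pose proof (picard_iter_lipschitz m t t' i Ht Ht' Hi).
  replace (phi t i - phi t' i) with
    ((phi t i - iter m t i) + (iter m t i - iter m t' i) - (phi t' i - iter m t' i)) by ring.
  unfold Rminus at 1. eapply Rle_trans; [apply Rabs_triang|]. rewrite Rabs_Ropp.
  pose proof (Rabs_triang (phi t i - iter m t i) (iter m t i - iter m t' i)). lra.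
Qed.

Lemma picard_limit_continuous t i : s - del < t < s + del -> (i <= d)%nat ->
  continuous (fun z => phi z i) t.
Proof.
  intros Ht Hi. apply (continuous_of_lipschitz _ (s - del) (s + del) M t Ht).
  intros y Hy. apply picard_limit_lipschitz; assumption.
Qed.

Lemma picard_limit_in_box t : s - del < t < s + del -> in_box d l (phi t).
Proof.
  intros Ht i Hi. destruct picard_time_facts as [_ [_ [HDM _]]].
  pose proof (picard_limit_approx 0 t i Ht Hi) as H. change (iter 0 t i) with (l i) in H.
  rewrite pow_O in H. lra.
Qed.

Lemma F_picard_limit_continuous i z : (i <= d)%nat -> s - del < z < s + del ->
  continuous (fun z => F (phi z) i) z.
Proof.
  intros Hi Hz. apply F_continuous; [|exact Hi]. intros j Hj. apply picard_limit_continuous; assumption.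
Qed.

Lemma picard_integral_gap m t i : s - del < t < s + del -> (i <= d)%nat ->
  Rabs (RInt (fun z => F (iter m z) i) s t - RInt (fun z => F (phi z) i) s t)
    <= L * (D * (2 * C * q ^ m)) * del.
Proof.
  intros Ht Hi. destruct picard_time_facts as [Hdel [HD [HDM [HDL HMd]]]].
  assert (Hs : s - del < s < s + del) by lra.
  assert (Hcf := fun z => F_picard_limit_continuous i z Hi).
  assert (Hcm := fun z => F_picard_iter_continuous m i z Hi).
  rewrite <- (RInt_minus (fun z => F (iter m z) i) (fun z => F (phi z) i));
    [| apply (ex_RInt_interval _ _ _ s t Hcm Hs Ht) | apply (ex_RInt_interval _ _ _ s t Hcf Hs Ht)].
  eapply Rle_trans; [apply abs_RInt_le|].
  - apply (ex_RInt_interval _ (s - del) (s + del) s t); [|exact Hs|exact Ht].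
    intros z Hz. apply (continuous_minus (fun z => F (iter m z) i) (fun z => F (phi z) i));
      [apply Hcm | apply Hcf]; exact Hz.
  - intros z Hz. assert (Hz' := between_in_interval _ _ s t z Hs Ht Hz).
    eapply Rle_trans;
      [apply F_lipschitz; [apply picard_iter_in_box, Hz' | apply picard_limit_in_box, Hz' | exact Hi]|].
    apply Rmult_le_compat_l; [lra|]. apply vnorm_le. intros j Hj.
    rewrite Rabs_minus_sym. apply picard_limit_approx; assumption.
  - assert (Rabs (t - s) <= del) by (apply Rabs_le; lra).
    assert (0 <= q ^ m) by (apply pow_le; lra).
    apply Rmult_le_compat_l; [|assumption]. apply Rmult_le_pos; [lra|]. apply Rmult_le_pos; nra.
Qed.

Lemma picard_limit_integral t i : s - del < t < s + del -> (i <= d)%nat ->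
  phi t i = l i + RInt (fun z => F (phi z) i) s t.
Proof.
  intros Ht Hi. destruct picard_time_facts as [Hdel [HD [HDM [HDL HMd]]]].
  apply Rminus_diag_uniq, (eq_0_of_geom_bound _ (2 * C * q + L * (D * (2 * C)) * del) q); [lra|].
  intros m.
  pose proof (picard_limit_approx (S m) t i Ht Hi) as H1.
  change (iter (S m) t i) with (l i + RInt (fun z => F (iter m z) i) s t) in H1.
  pose proof (picard_integral_gap m t i Ht Hi) as H2.
  replace (phi t i - (l i + RInt (fun z => F (phi z) i) s t)) with
    ((phi t i - (l i + RInt (fun z => F (iter m z) i) s t)) +
     (RInt (fun z => F (iter m z) i) s t - RInt (fun z => F (phi z) i) s t)) by ring.
  eapply Rle_trans; [apply Rabs_triang|]. simpl pow in H1.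
  replace ((2 * C * q + L * (D * (2 * C)) * del) * q ^ m)
    with (2 * C * (q * q ^ m) + L * (D * (2 * C * q ^ m)) * del) by ring.
  lra.
Qed.

Theorem picard_local_solution : exists g : R -> nat -> R,
  (forall i, (i <= d)%nat -> g s i = l i) /\
  forall t, s - del < t < s + del -> in_box d l (g t) /\
    forall i, (i <= d)%nat -> is_derive (fun z => g z i) t (F (g t) i).
Proof.
  destruct picard_time_facts as [Hdel _].
  assert (Hs : s - del < s < s + del) by lra.
  exists phi. split.
  - intros i Hi. rewrite (picard_limit_integral s i Hs Hi), RInt_point. apply Rplus_0_r.
  - intros t Ht. split; [apply picard_limit_in_box, Ht|]. intros i Hi.
    assert (Hcf := fun z => F_picard_limit_continuous i z Hi).
    apply (is_derive_ext_loc (fun z => l i + RInt (fun z => F (phi z) i) s z)).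
    + apply (filter_imp (fun z => s - del < z < s + del)); [|apply locally_open_interval, Ht].
      intros z Hz. symmetry. apply picard_limit_integral; assumption.
    + apply (is_derive_eq _ _ (0 + F (phi t) i)); [|ring].
      apply is_derive_Rplus; [apply is_derive_Rconst|].
      exact (is_derive_RInt_interval _ _ _ s t Hcf Hs Ht).
Qed.

(* On an interval of length [< del], each pass through the Lipschitz bound divides the distance
   between two solutions in the box by four. *)
Lemma local_solution_unique (g h : R -> nat -> R) b : s <= b < s + del ->
  (forall z, s <= z <= b -> in_box d l (g z) /\ in_box d l (h z)) ->
  (forall z, s <= z <= b -> forall i, (i <= d)%nat ->
     is_derive (fun y => g y i) z (F (g z) i) /\ is_derive (fun y => h y i) z (F (h z) i)) ->
  (forall i, (i <= d)%nat -> g s i = h s i) ->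
  forall z, s <= z <= b -> forall i, (i <= d)%nat -> g z i = h z i.
Proof.
  intros Hb Hbox Hder H0. destruct picard_time_facts as [Hdel [HD [_ [HDL _]]]]. unfold q in HDL.
  assert (Hgeom : forall m z, s <= z <= b -> forall i, (i <= d)%nat
      -> Rabs (g z i - h z i) <= 2 * (1/4) ^ m).
  { induction m as [|m IH]; intros z Hz i Hi.
    - destruct (Hbox z Hz) as [Hg Hh]. pose proof (Hg i Hi). pose proof (Hh i Hi).
      replace (g z i - h z i) with ((g z i - l i) - (h z i - l i)) by ring.
      simpl. unfold Rminus at 1. eapply Rle_trans; [apply Rabs_triang|]. rewrite Rabs_Ropp. lra.
    - assert (Hw : Rabs ((g z i - h z i) - (g s i - h s i)) <= L * (D * (2 * (1/4) ^ m)) * (z - s)).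
      { apply (abs_sub_le_of_derive_bound (fun y => g y i - h y i) (fun y => F (g y) i - F (h y) i));
          [lra| |].
        - intros y Hy. destruct (Hder y ltac:(lra) i Hi). apply is_derive_Rminus; assumption.
        - intros y Hy. destruct (Hbox y ltac:(lra)).
          eapply Rle_trans; [apply F_lipschitz; assumption|].
          apply Rmult_le_compat_l; [lra|]. apply vnorm_le. intros j Hj. apply IH; [lra | exact Hj]. }
      rewrite (H0 i Hi), Rminus_diag, Rminus_0_r in Hw.
      assert (0 <= (1/4) ^ m) by (apply pow_le; lra).
      assert (L * (D * (2 * (1/4) ^ m)) * (z - s) <= L * (D * (2 * (1/4) ^ m)) * del)
        by (apply Rmult_le_compat_l; [apply Rmult_le_pos; [|apply Rmult_le_pos]|]; lra).
      simpl pow. nra. }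
  intros z Hz i Hi. apply Rminus_diag_uniq, (eq_0_of_geom_bound _ 2 (1/4)); [lra|].
  intros m. apply Hgeom; assumption.
Qed.

End LocalSolution.

(** * The system as a vector field *)

(* Component [0] is [rho], component [i] (for [1 <= i <= n]) is [lambda_i]. *)
Definition sys_field (n : nat) (k cb : R) (v : nat -> R) (i : nat) : R :=
  match i with
  | O => - v O * sum_f_R0 (fun m => v (S m)) (pred n)
  | S _ => - v i ^ 2 + k / INR n * (v O - cb)
  end.

Definition sol_vec (lam : nat -> R -> R) (rho : R -> R) (t : R) (i : nat) : R :=
  match i with O => rho t | S _ => lam i t end.

Lemma sum_shift_abs_le n (v : nat -> R) K : (1 <= n)%nat -> (forall i, (1 <= i <= n)%nat
    -> Rabs (v i) <= K) ->
  Rabs (sum_f_R0 (fun m => v (S m)) (pred n)) <= INR n * K.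
Proof.
  intros Hn Hv. eapply Rle_trans; [apply sum_f_R0_triangle|].
  replace (INR n) with (INR (S (pred n))) by (f_equal; lia).
  apply vnorm_le. intros m Hm. apply Hv. lia.
Qed.

Lemma vnorm_split n (v : nat -> R) : (1 <= n)%nat ->
  vnorm n v = Rabs (v O) + sum_f_R0 (fun m => Rabs (v (S m))) (pred n).
Proof. intros Hn. unfold vnorm. rewrite decomp_sum by lia. reflexivity. Qed.

Lemma sys_field_bounded n k cb K : (1 <= n)%nat -> 0 <= K -> exists M, 0 < M /\
  forall v, (forall i, (i <= n)%nat -> Rabs (v i) <= K) ->
  forall i, (i <= n)%nat -> Rabs (sys_field n k cb v i) <= M.
Proof.
  intros Hn HK.
  assert (HnK : 0 <= INR n * K) by (apply Rmult_le_pos; [apply pos_INR | exact HK]).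
  assert (Hc : 0 <= Rabs (k / INR n) * (K + Rabs cb))
    by (apply Rmult_le_pos; [apply Rabs_pos | pose proof (Rabs_pos cb); lra]).
  exists (K * (INR n * K) + K * K + Rabs (k / INR n) * (K + Rabs cb) + 1). split; [nra|].
  intros v Hv i Hi. pose proof (Hv O ltac:(lia)). pose proof (Rabs_pos (v O)).
  destruct i as [|i].
  - simpl sys_field. rewrite Rabs_mult, Rabs_Ropp.
    assert (Hs := sum_shift_abs_le n v K Hn (fun i Hi => Hv i ltac:(lia))).
    pose proof (Rabs_pos (sum_f_R0 (fun m => v (S m)) (pred n))).
    assert (Rabs (v O) * Rabs (sum_f_R0 (fun m => v (S m)) (pred n)) <= K * (INR n * K))
      by (apply Rmult_le_compat; auto). nra.
  - cbv beta iota delta [sys_field]. eapply Rle_trans; [apply Rabs_triang|].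
    rewrite Rabs_Ropp, Rabs_mult. simpl pow. rewrite Rmult_1_r, Rabs_mult.
    pose proof (Hv (S i) Hi). pose proof (Rabs_pos (v (S i))).
    assert (Rabs (v (S i)) * Rabs (v (S i)) <= K * K) by (apply Rmult_le_compat; auto).
    assert (Rabs (v O - cb) <= K + Rabs cb)
      by (unfold Rminus; eapply Rle_trans; [apply Rabs_triang | rewrite Rabs_Ropp; lra]).
    assert (Rabs (k / INR n) * Rabs (v O - cb) <= Rabs (k / INR n) * (K + Rabs cb))
      by (apply Rmult_le_compat_l; [apply Rabs_pos | assumption]).
    nra.
Qed.

Lemma sys_field_lipschitz n k cb K : (1 <= n)%nat -> 0 <= K -> exists L, 0 < L /\
  forall v w, (forall i, (i <= n)%nat -> Rabs (v i) <= K) -> (forall i, (i <= n)%nat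
      -> Rabs (w i) <= K) ->
  forall i, (i <= n)%nat ->
    Rabs (sys_field n k cb v i - sys_field n k cb w i) <= L * vnorm n (fun j => v j - w j).
Proof.
  intros Hn HK.
  assert (HnK : 0 <= INR n * K) by (apply Rmult_le_pos; [apply pos_INR | exact HK]).
  exists (INR n * K + K + 2 * K + Rabs (k / INR n) + 1). split; [pose proof (Rabs_pos (k / INR n));
      lra|].
  intros v w Hv Hw i Hi. set (N := vnorm n (fun j => v j - w j)).
  assert (HN : 0 <= N) by (eapply Rle_trans; [apply Rabs_pos | apply (vnorm_ge_abs n _ O); lia]).
  assert (H0 : Rabs (v O - w O) <= N) by (apply (vnorm_ge_abs n (fun j => v j - w j) O); lia).
  assert (Hk : Rabs (k / INR n) * Rabs (v O - w O) <= Rabs (k / INR n) * N)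
    by (apply Rmult_le_compat_l; [apply Rabs_pos | exact H0]).
  pose proof (Rabs_pos (k / INR n)).
  destruct i as [|i].
  - simpl sys_field.
    set (Sv := sum_f_R0 (fun m => v (S m)) (pred n)). set (Sw := sum_f_R0 (fun m => w (S m)) (pred n)).
    assert (HSw : Rabs Sw <= INR n * K) by (apply sum_shift_abs_le; [exact Hn | intros j Hj;
        apply Hw; lia]).
    assert (HSd : Rabs (Sv - Sw) <= N).
    { unfold Sv, Sw. rewrite <- minus_sum. eapply Rle_trans; [apply sum_f_R0_triangle|].
      unfold N. rewrite (vnorm_split n _ Hn). pose proof (Rabs_pos (v O - w O)). lra. }
    replace (- v O * Sv - - w O * Sw) with (- ((v O - w O) * Sw + v O * (Sv - Sw))) by ring.
    rewrite Rabs_Ropp. eapply Rle_trans; [apply Rabs_triang|]. rewrite !Rabs_mult.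
    pose proof (Hv O ltac:(lia)).
    assert (Rabs (v O - w O) * Rabs Sw <= N * (INR n * K)) by (apply Rmult_le_compat;
        auto using Rabs_pos).
    assert (Rabs (v O) * Rabs (Sv - Sw) <= K * N) by (apply Rmult_le_compat; auto using Rabs_pos).
    nra.
  - cbv beta iota delta [sys_field].
    replace (- v (S i) ^ 2 + k / INR n * (v O - cb) - (- w (S i) ^ 2 + k / INR n * (w O - cb)))
      with (- ((v (S i) - w (S i)) * (v (S i) + w (S i))) + k / INR n * (v O - w O)) by ring.
    eapply Rle_trans; [apply Rabs_triang|]. rewrite Rabs_Ropp, !Rabs_mult.
    assert (Rabs (v (S i) - w (S i)) <= N) by (apply (vnorm_ge_abs n (fun j => v j - w j)), Hi).
    assert (Rabs (v (S i) + w (S i)) <= 2 * K)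
      by (eapply Rle_trans; [apply Rabs_triang | pose proof (Hv _ Hi); pose proof (Hw _ Hi); lra]).
    assert (Rabs (v (S i) - w (S i)) * Rabs (v (S i) + w (S i)) <= N * (2 * K))
      by (apply Rmult_le_compat; auto using Rabs_pos).
    nra.
Qed.

Lemma sys_field_continuous n k cb (g : R -> nat -> R) t : (1 <= n)%nat ->
  (forall i, (i <= n)%nat -> continuous (fun z => g z i) t) ->
  forall i, (i <= n)%nat -> continuous (fun z => sys_field n k cb (g z) i) t.
Proof.
  intros Hn Hc i Hi. destruct i as [|i].
  - simpl sys_field. apply (continuous_mult (fun z => - g z O));
      [apply (continuous_opp (fun z => g z O)), Hc; lia|].
    assert (Hsum : forall N, (N < n)%nat -> continuous (fun z => sum_f_R0 (fun m => g z (S m)) N) t).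
    { induction N as [|N IH]; intros HN; simpl; [apply Hc; lia|].
      apply (continuous_plus (fun z => sum_f_R0 (fun m => g z (S m)) N));
        [apply IH; lia | apply Hc; lia]. }
    apply Hsum. lia.
  - cbv beta iota delta [sys_field]. apply (continuous_plus (fun z => - g z (S i) ^ 2)).
    + apply (continuous_opp (fun z => g z (S i) ^ 2)).
      apply (continuous_ext (fun z => g z (S i) * g z (S i))); [intros; simpl; ring|].
      apply (continuous_mult (fun z => g z (S i))); apply Hc, Hi.
    + apply (continuous_mult (fun _ => k / INR n)); [apply continuous_const|].
      apply (continuous_minus (fun z => g z O)); [apply Hc; lia | apply continuous_const].
Qed.

Lemma sol_vec_derive n k cb rho0 lam0 T lam rho : is_sol n k cb rho0 lam0 T lam rho ->
  forall t, 0 < t < T -> forall i, (i <= n)%nat ->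
  is_derive (fun z => sol_vec lam rho z i) t (sys_field n k cb (sol_vec lam rho t) i).
Proof.
  intros (_ & _ & _ & _ & Hder) t Ht i Hi. destruct (Hder t Ht) as [Hl Hr].
  destruct i as [|i]; [exact Hr | exact (Hl (S i) ltac:(lia))].
Qed.

Lemma sol_glue n k cb rho0 lam0 s lam rho (phi : R -> nat -> R) s' T : 0 < s' < s -> s < T ->
  is_sol n k cb rho0 lam0 s lam rho ->
  (forall t, s' < t < T -> forall i, (i <= n)%nat
      -> is_derive (fun z => phi z i) t (sys_field n k cb (phi t) i)) ->
  (forall t, s' < t < s -> forall i, (i <= n)%nat -> phi t i = sol_vec lam rho t i) ->
  exists lam' rho', is_sol n k cb rho0 lam0 T lam' rho' /\
    forall t, 0 <= t < s -> rho' t = rho t /\ forall i, (1 <= i <= n)%nat -> lam' i t = lam i t.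
Proof.
  intros Hs' HT Hsol Hphi Hagree.
  pose proof (sol_vec_derive n k cb rho0 lam0 s lam rho Hsol) as Hold.
  set (G := fun t i => if Rlt_dec t s then sol_vec lam rho t i else phi t i).
  assert (HG : forall t, 0 < t < T -> forall i, (i <= n)%nat ->
    is_derive (fun z => G z i) t (sys_field n k cb (G t) i)).
  { intros t Ht i Hi. unfold G at 2. destruct (Rlt_dec t s) as [Hts|Hts].
    - apply (is_derive_ext_loc (fun z => sol_vec lam rho z i)); [|apply Hold; [lra | exact Hi]].
      apply (filter_imp (fun z => 0 < z < s)); [|apply locally_open_interval; lra].
      intros z Hz. unfold G. destruct (Rlt_dec z s); [reflexivity | lra].
    - apply (is_derive_ext_loc (fun z => phi z i)); [|apply Hphi; [lra | exact Hi]].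
      apply (filter_imp (fun z => s' < z < T)); [|apply locally_open_interval; lra].
      intros z Hz. unfold G. destruct (Rlt_dec z s); [apply Hagree; [lra | exact Hi] | reflexivity]. }
  assert (Hnear0 : forall (P : R -> Prop), (forall y, 0 < y < s -> P y) -> at_right 0 P).
  { intros P HP. exists (mkposreal s ltac:(lra)). intros y Hy Hy0.
    change (Rabs (y - 0) < s) in Hy. apply HP. apply Rabs_def2 in Hy. lra. }
  destruct Hsol as (Hr0 & Hl0 & Hrl & Hll & _).
  exists (fun i t => G t i), (fun t => G t O). split.
  - split; [|split; [|split; [|split]]].
    + unfold G. destruct (Rlt_dec 0 s); [exact Hr0 | lra].
    + intros i Hi. unfold G. destruct (Rlt_dec 0 s); [|lra]. destruct i as [|i]; [lia | apply Hl0, Hi].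
    + apply (filterlim_ext_loc rho); [|exact Hrl].
      apply Hnear0. intros y Hy. unfold G. destruct (Rlt_dec y s); [reflexivity | lra].
    + intros i Hi. apply (filterlim_ext_loc (lam i)); [|apply Hll, Hi].
      apply Hnear0. intros y Hy. unfold G. destruct (Rlt_dec y s); [|lra]. destruct i; [lia |
          reflexivity].
    + intros t Ht. split; [|exact (HG t Ht O ltac:(lia))].
      intros i Hi. destruct i as [|i]; [lia | exact (HG t Ht (S i) ltac:(lia))].
  - intros t Ht. unfold G. destruct (Rlt_dec t s); [|lra]. split; [reflexivity|].
    intros i Hi. destruct i; [lia | reflexivity].
Qed.

(* Restart at a point [s'] closer to [s] than half the existence time granted by the bound; the
   local solution agrees with the old one on [[s', s)] by uniqueness. *)
Lemma sol_restart n k cb rho0 lam0 s lam rho t1 K0 : (1 <= n)%nat -> 0 < t1 < s ->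
  is_sol n k cb rho0 lam0 s lam rho ->
  (forall t, t1 < t < s -> forall i, (i <= n)%nat -> Rabs (sol_vec lam rho t i) <= K0) ->
  exists s' T (phi : R -> nat -> R), 0 < s' < s /\ s < T /\
    (forall t, s' < t < T -> forall i, (i <= n)%nat
        -> is_derive (fun z => phi z i) t (sys_field n k cb (phi t) i)) /\
    (forall t, s' < t < s -> forall i, (i <= n)%nat -> phi t i = sol_vec lam rho t i).
Proof.
  intros Hn Ht1 Hsol Hbd.
  set (old := sol_vec lam rho) in *.
  pose proof (sol_vec_derive n k cb rho0 lam0 s lam rho Hsol) as Hold. fold old in Hold.
  assert (HK0 : 0 <= K0) by (eapply Rle_trans; [apply Rabs_pos
      | apply (Hbd ((t1 + s) / 2) ltac:(lra) O); lia]).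
  destruct (sys_field_bounded n k cb (K0 + 1) Hn ltac:(lra)) as [M [HM HFM]].
  destruct (sys_field_lipschitz n k cb (K0 + 1) Hn ltac:(lra)) as [L [HL HFL]].
  destruct (picard_time_facts n M L HM HL) as [Hdel [_ [_ [_ HMd]]]].
  set (del := picard_time n M L) in *.
  set (s' := Rmax ((t1 + s) / 2) (s - del / 2)).
  assert (Hs' : t1 < s' < s /\ s - s' <= del / 2).
  { pose proof (Rmax_l ((t1 + s) / 2) (s - del / 2)) as H1.
    pose proof (Rmax_r ((t1 + s) / 2) (s - del / 2)) as H2.
    assert (H3 : s' < s) by (apply Rmax_lub_lt; lra). fold s' in H1, H2. lra. }
  set (l := old s').
  assert (Hbox : forall v, in_box n l v -> forall i, (i <= n)%nat -> Rabs (v i) <= K0 + 1).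
  { intros v Hv i Hi. pose proof (Hv i Hi). pose proof (Hbd s' ltac:(lra) i Hi).
    replace (v i) with ((v i - l i) + l i) by ring.
    eapply Rle_trans; [apply Rabs_triang | unfold l, old in *; lra]. }
  assert (HFL' : forall v w, in_box n l v -> in_box n l w -> forall i, (i <= n)%nat ->
    Rabs (sys_field n k cb v i - sys_field n k cb w i) <= L * vnorm n (fun j => v j - w j)).
  { intros v w Hv Hw i Hi. apply HFL; [apply Hbox, Hv | apply Hbox, Hw | exact Hi]. }
  destruct (picard_local_solution n (sys_field n k cb) l s' M L HM HL) as [phi [Hphi0 Hphi]];
    [intros v Hv i Hi; apply HFM; [apply Hbox, Hv | exact Hi] | exact HFL' |
     intros g t Hg i Hi; apply sys_field_continuous; assumption |].
  fold del in Hphi.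
  assert (Hold_box : forall t, s' <= t < s -> in_box n l (old t)).
  { intros t Ht i Hi.
    assert (Hlip : Rabs (old t i - old s' i) <= M * Rabs (t - s')).
    { apply (lipschitz_of_derive_bound (fun z => old z i) (fun z => sys_field n k cb (old z) i) t1 s);
        [intros x Hx; apply Hold; [lra | exact Hi] | | lra | lra].
      intros x Hx. apply HFM; [|exact Hi]. intros j Hj. pose proof (Hbd x Hx j Hj). lra. }
    rewrite (Rabs_right (t - s')) in Hlip by lra.
    assert (M * (t - s') <= M * del) by (apply Rmult_le_compat_l; lra). unfold l. lra. }
  exists s', (s' + del), phi. split; [lra|]. split; [lra|]. split.
  - intros t Ht i Hi. apply Hphi; [lra | exact Hi].
  - intros t Ht. apply (local_solution_unique n (sys_field n k cb) l s' M L HM HL HFL' phi old t);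
      [fold del; lra | | | exact Hphi0 | lra].
    + intros z Hz. split; [apply Hphi; lra | apply Hold_box; lra].
    + intros z Hz i Hi. split; [apply Hphi; [lra | exact Hi] | apply Hold; [lra | exact Hi]].
Qed.

Lemma maximal_sol_unbounded n k cb rho0 lam0 s lam rho t1 K0 : (1 <= n)%nat -> 0 < t1 < s ->
  maximal_sol n k cb rho0 lam0 s lam rho ->
  (forall t, t1 < t < s -> forall i, (i <= n)%nat -> Rabs (sol_vec lam rho t i) <= K0) -> False.
Proof.
  intros Hn Ht1 [Hsol Hmax] Hbd.
  destruct (sol_restart n k cb rho0 lam0 s lam rho t1 K0 Hn Ht1 Hsol Hbd)
    as (s' & T & phi & Hs' & HT & Hphi & Hagree).
  exact (Hmax T HT (sol_glue n k cb rho0 lam0 s lam rho phi s' T Hs' HT Hsol Hphi Hagree)).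
Qed.

(** * The functions [u_i] *)

(* [lam] and [rho] are only specified on [[0, s)]; [clamp0] freezes them at their value at [0]
   for negative times, which makes them continuous at [0]. *)
Definition clamp0 (f : R -> R) (t : R) : R := f (Rmax 0 t).

Definition uc (lam : nat -> R -> R) (i : nat) (t : R) : R := exp (RInt (clamp0 (lam i)) 0 t).

Lemma clamp0_eq (f : R -> R) t : 0 <= t -> clamp0 f t = f t.
Proof. intros Ht. unfold clamp0. now rewrite Rmax_right. Qed.

Lemma locally_pos (t : R) : 0 < t -> locally t (fun y => 0 < y).
Proof.
  intros Ht. apply (filter_imp (fun y => 0 < y < t + 1)); [intros y Hy; lra|].
  apply locally_open_interval. lra.
Qed.

Lemma clamp0_derive (f : R -> R) t l : 0 < t -> is_derive f t l -> is_derive (clamp0 f) t l.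
Proof.
  intros Ht Hf. apply (is_derive_ext_loc f); [|exact Hf].
  apply (filter_imp (fun y => 0 < y)); [|apply locally_pos, Ht].
  intros y Hy. symmetry. apply clamp0_eq. lra.
Qed.

Lemma clamp0_continuous (f : R -> R) s : filterlim f (at_right 0) (locally (f 0)) ->
  (forall t, 0 < t < s -> continuous f t) -> forall t, t < s -> continuous (clamp0 f) t.
Proof.
  intros Hr Hc t Ht. destruct (Rtotal_order t 0) as [Hneg|[->|Hpos]].
  - apply (continuous_ext_loc _ (fun _ => f 0)); [|apply continuous_const].
    apply (filter_imp (fun y => y < 0)).
    + intros y Hy. unfold clamp0. now rewrite Rmax_left by lra.
    + apply (filter_imp (fun y => t - 1 < y < 0)); [intros y Hy; lra|]. apply locally_open_interval. lra.
  - apply filterlim_locally. intros eps.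
    destruct (proj1 (filterlim_locally f (f 0)) Hr eps) as [d Hd].
    exists d. intros y Hy. unfold clamp0. rewrite (Rmax_left 0 0) by lra.
    destruct (Rle_or_lt y 0) as [Hy0|Hy0].
    + rewrite Rmax_left by lra. apply ball_center.
    + rewrite Rmax_right by lra. apply Hd; assumption.
  - apply (continuous_ext_loc _ f); [|apply Hc; lra].
    apply (filter_imp (fun y => 0 < y)); [|apply locally_pos, Hpos].
    intros y Hy. symmetry. apply clamp0_eq. lra.
Qed.

Lemma uc_pos lam i t : 0 < uc lam i t.
Proof. apply exp_pos. Qed.

Lemma uc_0 lam i : uc lam i 0 = 1.
Proof. unfold uc. rewrite RInt_point. apply exp_0. Qed.

Lemma u_eq_uc lam i t : 0 <= t -> u lam i t = uc lam i t.
Proof.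
  intros Ht. unfold u, uc. f_equal. apply RInt_ext. intros x Hx.
  rewrite Rmin_left, Rmax_right in Hx by lra. symmetry. apply clamp0_eq. lra.
Qed.

Section Solution.

Variables (n : nat) (k cb rho0 : R) (lam0 : nat -> R) (s : R) (lam : nat -> R -> R) (rho : R -> R).
Hypothesis Hsol : is_sol n k cb rho0 lam0 s lam rho.
Hypothesis n_pos : (1 <= n)%nat.
Hypothesis s_pos : 0 < s.

Let lamc i := clamp0 (lam i).

Lemma lamc_continuous i t : (1 <= i <= n)%nat -> t < s -> continuous (lamc i) t.
Proof.
  intros Hi Ht. destruct Hsol as (_ & Hl0 & _ & Hll & Hder).
  apply (clamp0_continuous _ s); [|intros x Hx;
      exact (continuous_of_is_derive _ _ _ (proj1 (Hder x Hx) i Hi)) | exact Ht].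
  rewrite (Hl0 i Hi). apply Hll, Hi.
Qed.

Lemma lamc_derive i t : (1 <= i <= n)%nat -> 0 < t < s ->
  is_derive (lamc i) t (- lamc i t ^ 2 + k / INR n * (rho t - cb)).
Proof.
  intros Hi Ht. unfold lamc. rewrite clamp0_eq by lra.
  apply clamp0_derive; [lra|]. destruct Hsol as (_ & _ & _ & _ & Hder). apply (Hder t Ht), Hi.
Qed.

Lemma RInt_lamc_derive i t : (1 <= i <= n)%nat -> t < s ->
  is_derive (fun t => RInt (lamc i) 0 t) t (lamc i t).
Proof.
  intros Hi Ht.
  apply (is_derive_RInt_interval _ (Rmin t 0 - 1) s); [| |split; [pose proof (Rmin_l t 0)|]; lra].
  - intros z Hz. apply lamc_continuous; [exact Hi | lra].
  - pose proof (Rmin_r t 0). lra.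
Qed.

Lemma uc_derive i t : (1 <= i <= n)%nat -> t < s -> is_derive (uc lam i) t (lamc i t * uc lam i t).
Proof. intros Hi Ht. apply is_derive_Rexp, RInt_lamc_derive; assumption. Qed.

Lemma uc_continuous i t : (1 <= i <= n)%nat -> t < s -> continuous (uc lam i) t.
Proof. intros Hi Ht. exact (continuous_of_is_derive _ _ _ (uc_derive i t Hi Ht)). Qed.

Lemma Derive_u i t : (1 <= i <= n)%nat -> 0 < t < s -> Derive (u lam i) t = lamc i t * uc lam i t.
Proof.
  intros Hi Ht. rewrite (Derive_ext_loc _ (uc lam i)).
  - apply is_derive_unique, uc_derive; [exact Hi | lra].
  - apply (filter_imp (fun y => 0 < y)); [|apply locally_pos; lra].
    intros y Hy. apply u_eq_uc. lra.
Qed.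

Lemma duc_derive i t : (1 <= i <= n)%nat -> 0 < t < s ->
  is_derive (fun t => lamc i t * uc lam i t) t (k / INR n * (rho t - cb) * uc lam i t).
Proof.
  intros Hi Ht.
  apply (is_derive_eq _ _ _ _ (is_derive_Rmult _ _ _ _ _ (lamc_derive i t Hi Ht) (uc_derive i t Hi
      ltac:(lra)))).
  ring.
Qed.

Lemma wronskian_constant i j t : (1 <= i <= n)%nat -> (1 <= j <= n)%nat -> 0 <= t < s ->
  uc lam i t * uc lam j t * (lamc j t - lamc i t) = lam0 j - lam0 i.
Proof.
  intros Hi Hj Ht. destruct Hsol as (_ & Hl0 & _).
  set (W := fun t => uc lam i t * uc lam j t * (lamc j t - lamc i t)).
  change (W t = lam0 j - lam0 i).
  replace (lam0 j - lam0 i) with (W 0)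
    by (unfold W, lamc; rewrite !uc_0, !clamp0_eq, Hl0, Hl0 by (assumption || lra); ring).
  symmetry. apply (constant_of_derive_0 W 0 t); [lra| |].
  - intros x Hx. unfold W.
    apply (continuous_mult (fun t => uc lam i t * uc lam j t)).
    + apply (continuous_mult (uc lam i)); apply uc_continuous; (assumption || lra).
    + apply (continuous_minus (lamc j)); apply lamc_continuous; (assumption || lra).
  - intros x Hx. unfold W.
    apply (is_derive_eq _ _ _ _ (is_derive_Rmult _ _ _ _ _
      (is_derive_Rmult _ _ _ _ _ (uc_derive i x Hi ltac:(lra)) (uc_derive j x Hj ltac:(lra)))
      (is_derive_Rminus _ _ _ _ _ (lamc_derive j x Hj ltac:(lra)) (lamc_derive i x Hi ltac:(lra))))).
    ring.
Qed.

Lemma lamc_le i j t : (1 <= i <= n)%nat -> (1 <= j <= n)%nat -> lam0 i <= lam0 j -> 0 <= t < s ->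
  lamc i t <= lamc j t.
Proof.
  intros Hi Hj Hl Ht. pose proof (wronskian_constant i j t Hi Hj Ht) as HW.
  pose proof (uc_pos lam i t). pose proof (uc_pos lam j t).
  assert (0 < uc lam i t * uc lam j t) by (apply Rmult_lt_0_compat; assumption).
  destruct (Rle_or_lt (lamc i t) (lamc j t)) as [Hle|Hlt]; [exact Hle | nra].
Qed.

Lemma Derive_u_mul_u i j t : (1 <= i <= n)%nat -> 0 < t < s ->
  Derive (u lam i) t * u lam j t = lamc i t * uc lam i t * uc lam j t.
Proof. intros Hi Ht. rewrite Derive_u, u_eq_uc by (assumption || lra). reflexivity. Qed.

Lemma u_mul_Derive_u i j t : (1 <= i <= n)%nat -> (1 <= j <= n)%nat -> 0 < t < s ->
  u lam i t * Derive (u lam j) t = lamc i t * uc lam i t * uc lam j t + (lam0 j - lam0 i).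
Proof.
  intros Hi Hj Ht. rewrite Derive_u, u_eq_uc by (assumption || lra).
  rewrite <- (wronskian_constant i j t Hi Hj ltac:(lra)). ring.
Qed.

Lemma lamc_uc_uc_continuous i j t : (1 <= i <= n)%nat -> (1 <= j <= n)%nat -> t < s ->
  continuous (fun t => lamc i t * uc lam i t * uc lam j t) t.
Proof.
  intros Hi Hj Ht.
  apply (continuous_mult (fun t => lamc i t * uc lam i t)); [apply (continuous_mult (lamc i))|].
  - apply lamc_continuous; assumption.
  - apply uc_continuous; assumption.
  - apply uc_continuous; assumption.
Qed.

Let Lam t := sum_f_R0 (fun m => RInt (lamc (S m)) 0 t) (pred n).

Lemma Lam_derive t : t < s -> is_derive Lam t (sum_f_R0 (fun m => lamc (S m) t) (pred n)).
Proof.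
  intros Ht. unfold Lam.
  assert (H : forall N, (N <= pred n)%nat ->
    is_derive (fun t => sum_f_R0 (fun m => RInt (lamc (S m)) 0 t) N) t (sum_f_R0 (fun m => lamc (S m) t) N)).
  { induction N as [|N IH]; intros HN; simpl.
    - apply RInt_lamc_derive; [lia | exact Ht].
    - apply is_derive_Rplus; [apply IH; lia | apply RInt_lamc_derive; [lia | exact Ht]]. }
  apply H. lia.
Qed.

(* [rho * exp (sum_i int_0^t lambda_i)] is constant. *)
Lemma rho_formula t : 0 <= t < s -> rho t = rho0 * exp (- Lam t).
Proof.
  intros Ht. destruct Hsol as (Hr0 & _ & Hrl & _ & Hder).
  set (Q := fun t => clamp0 rho t * exp (Lam t)).
  assert (HQ : Q 0 = Q t).
  { apply (constant_of_derive_0 Q 0 t); [lra| |].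
    - intros x Hx. apply (continuous_mult (clamp0 rho)).
      + apply (clamp0_continuous rho s); [rewrite Hr0; exact Hrl | | lra].
        intros y Hy. exact (continuous_of_is_derive _ _ _ (proj2 (Hder y Hy))).
      + exact (continuous_of_is_derive _ _ _ (is_derive_Rexp _ _ _ (Lam_derive x ltac:(lra)))).
    - intros x Hx. unfold Q.
      apply (is_derive_eq _ _ _ _ (is_derive_Rmult _ _ _ _ _
        (clamp0_derive rho x _ ltac:(lra) (proj2 (Hder x ltac:(lra))))
        (is_derive_Rexp _ _ _ (Lam_derive x ltac:(lra))))).
      rewrite clamp0_eq by lra. unfold lam_sum.
      rewrite (sum_eq (fun m => lamc (S m) x) (fun m => lam (S m) x)); [ring|].
      intros m Hm. apply clamp0_eq. lra. }
  unfold Q in HQ. rewrite !clamp0_eq in HQ by lra.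
  assert (HL0 : Lam 0 = 0).
  { unfold Lam. rewrite (sum_eq _ (fun _ => 0)) by (intros; rewrite RInt_point; reflexivity).
      rewrite sum_cte. ring. }
  rewrite HL0, exp_0, Rmult_1_r, Hr0 in HQ. rewrite HQ, exp_Ropp.
  pose proof (exp_pos (Lam t)). field. lra.
Qed.

Lemma rho_pos : 0 < rho0 -> forall t, 0 <= t < s -> 0 < rho t.
Proof. intros Hr0 t Ht. rewrite rho_formula by exact Ht. apply Rmult_lt_0_compat; [exact Hr0 |
    apply exp_pos]. Qed.

Lemma rho_le_of_ordered t : 0 < rho0 -> (forall i, (1 <= i <= n)%nat -> lam0 1%nat <= lam0 i)
    -> 0 <= t < s ->
  rho t <= rho0 * exp (- (INR n * RInt (lamc 1) 0 t)).
Proof.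
  intros Hr0 Hord Ht. rewrite rho_formula by exact Ht.
  apply Rmult_le_compat_l; [lra|]. apply exp_le_of_le, Ropp_le_contravar. unfold Lam.
  replace (INR n * RInt (lamc 1) 0 t) with (sum_f_R0 (fun _ => RInt (lamc 1) 0 t) (pred n))
    by (rewrite sum_cte; replace (S (pred n)) with n by lia; ring).
  assert (Hex : forall i, (1 <= i <= n)%nat -> ex_RInt (lamc i) 0 t).
  { intros i Hi. apply (ex_RInt_interval _ (-1) s); [|lra|lra].
    intros z Hz. apply lamc_continuous; [exact Hi | lra]. }
  apply sum_Rle. intros m Hm. apply RInt_le; [lra | apply Hex; lia | apply Hex; lia |].
  intros x Hx. apply lamc_le; [lia | lia | apply Hord; lia | lra].
Qed.

Section BoundedBelow.

Hypothesis k_pos : 0 < k.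
Hypothesis cb_pos : 0 < cb.
Hypothesis rho0_pos : 0 < rho0.
Hypothesis lam0_min : forall i, (1 <= i <= n)%nat -> lam0 1%nat <= lam0 i.
Variables (t0 m : R).
Hypothesis t0_in : 0 < t0 < s.
Hypothesis m_pos : 0 < m.
Hypothesis uc1_ge : forall t, t0 < t < s -> m <= uc lam 1 t.

Let R0 := rho0 * exp (- (INR n * ln m)).
Let t1 := (t0 + s) / 2.
Let kn := k / INR n.

Lemma kn_pos : 0 < kn.
Proof. apply Rdiv_lt_0_compat; [exact k_pos | apply lt_0_INR; lia]. Qed.

Lemma rho_bounded t : t0 < t < s -> 0 < rho t <= R0.
Proof.
  intros Ht. split; [apply rho_pos; [exact rho0_pos | lra]|].
  eapply Rle_trans; [apply rho_le_of_ordered; [exact rho0_pos | exact lam0_min | lra]|].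
  apply Rmult_le_compat_l; [lra|]. apply exp_le_of_le, Ropp_le_contravar, Rmult_le_compat_l;
      [apply pos_INR|].
  rewrite <- (ln_exp (RInt (lamc 1) 0 t)). apply ln_le; [exact m_pos | apply uc1_ge, Ht].
Qed.

Lemma lamc_bounded_above : exists U, forall i, (1 <= i <= n)%nat -> forall t, t1 <= t < s
    -> lamc i t <= U.
Proof.
  set (A := kn * R0).
  assert (HA : 0 <= A) by (apply Rmult_le_pos; [left; apply kn_pos | unfold R0;
      pose proof (exp_pos (- (INR n * ln m))); nra]).
  exists (vnorm (pred n) (fun j => lamc (S j) t1) + (A + 1)). intros i Hi t Ht.
  assert (Hmax : lamc i t <= Rmax (lamc i t1) (A + 1)).
  { apply (riccati_upper_bound (lamc i) (fun x => kn * (rho x - cb)) t1 t A); [lra | | | lra].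
    - intros x Hx. apply lamc_derive; [exact Hi | unfold t1 in *; lra].
    - intros x Hx. destruct (rho_bounded x ltac:(unfold t1 in *; lra)).
      apply Rmult_le_compat_l; [left; apply kn_pos | lra]. }
  assert (Hi' : Rabs (lamc i t1) <= vnorm (pred n) (fun j => lamc (S j) t1)).
  { replace i with (S (pred i)) at 1 by lia. apply (vnorm_ge_abs _ (fun j => lamc (S j) t1)). lia. }
  pose proof (Rle_abs (lamc i t1)). pose proof (Rabs_pos (lamc i t1)).
  eapply Rle_trans; [exact Hmax|]. apply Rmax_lub; lra.
Qed.

Lemma uc1_bounded_above : exists X, 0 < X /\ forall t, t1 <= t < s -> uc lam 1 t <= X.
Proof.
  destruct lamc_bounded_above as [U HU].
  exists (exp (RInt (lamc 1) 0 t1 + Rabs U * s)). split; [apply exp_pos|]. intros t Ht.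
  apply exp_le_of_le. change (RInt (lamc 1) 0 t <= RInt (lamc 1) 0 t1 + Rabs U * s).
  assert (U * t1 - RInt (lamc 1) 0 t1 <= U * t - RInt (lamc 1) 0 t).
  { apply (nondecreasing_of_derive_closed (fun x => U * x - RInt (lamc 1) 0 x) (fun x => U - lamc 1 x));
      [lra | | ].
    - intros x Hx. apply is_derive_Rminus; [apply is_derive_Rlin | apply RInt_lamc_derive; [lia | lra]].
    - intros x Hx. assert (lamc 1 x <= U) by (apply HU; [lia | lra]). lra. }
  assert (U * (t - t1) <= Rabs U * s).
  { pose proof (Rle_abs U). pose proof (Rabs_pos U). unfold t1 in *.
    apply (Rle_trans _ (Rabs U * (t - (t0 + s) / 2))); [apply Rmult_le_compat_r; lra|].
    apply Rmult_le_compat_l; lra. }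
  lra.
Qed.

Lemma lamc1_bounded_below : exists Low, forall t, t1 <= t < s -> Low <= lamc 1 t.
Proof.
  destruct uc1_bounded_above as [X [HX HuX]].
  set (a := kn * cb). assert (Ha : 0 < a) by (apply Rmult_lt_0_compat; [apply kn_pos | exact cb_pos]).
  set (D0 := lamc 1 t1 * uc lam 1 t1 - a * X * s).
  assert (HD0 : forall t, t1 <= t < s -> D0 <= lamc 1 t * uc lam 1 t).
  { intros t Ht.
    assert (lamc 1 t1 * uc lam 1 t1 + a * X * t1 <= lamc 1 t * uc lam 1 t + a * X * t).
    { apply (nondecreasing_of_derive_closed (fun x => lamc 1 x * uc lam 1 x + a * X * x)
        (fun x => kn * (rho x - cb) * uc lam 1 x + a * X)); [lra | |].
      - intros x Hx. apply is_derive_Rplus; [apply duc_derive; [lia | unfold t1 in *; lra]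
          | apply is_derive_Rlin].
      - intros x Hx. destruct (rho_bounded x ltac:(unfold t1 in *; lra)) as [Hr _].
        pose proof (HuX x ltac:(lra)). pose proof (uc_pos lam 1 x). pose proof kn_pos.
        replace (kn * (rho x - cb) * uc lam 1 x + a * X) with
          (kn * rho x * uc lam 1 x + a * (X - uc lam 1 x)) by (unfold a; ring).
        assert (0 <= kn * rho x * uc lam 1 x) by (apply Rmult_le_pos; [apply Rmult_le_pos|]; lra).
        assert (0 <= a * (X - uc lam 1 x)) by (apply Rmult_le_pos; lra). lra. }
    assert (a * X * (t - t1) <= a * X * s) by (apply Rmult_le_compat_l; [nra | unfold t1 in *; lra]).
    unfold D0. nra. }
  exists (Rmin D0 0 / m). intros t Ht.
  pose proof (HD0 t Ht). pose proof (Rmin_l D0 0). pose proof (Rmin_r D0 0).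
  pose proof (uc1_ge t ltac:(unfold t1 in *; lra)). pose proof (uc_pos lam 1 t).
  assert (HLm : Rmin D0 0 / m * m = Rmin D0 0) by (field; lra).
  destruct (Rle_or_lt (Rmin D0 0 / m) (lamc 1 t)) as [Hle|Hlt]; [exact Hle | exfalso].
  assert (Rmin D0 0 / m <= 0) by (unfold Rdiv; pose proof (Rinv_0_lt_compat m m_pos); nra).
  assert (lamc 1 t * uc lam 1 t <= lamc 1 t * m) by (apply Rmult_le_compat_neg_l; lra).
  assert (lamc 1 t * m < Rmin D0 0 / m * m) by (apply Rmult_lt_compat_r; lra).
  lra.
Qed.

Lemma sol_bounded_of_uc1_bounded_below : exists t1 K0, 0 < t1 < s /\
  forall t, t1 < t < s -> forall i, (i <= n)%nat -> Rabs (sol_vec lam rho t i) <= K0.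
Proof.
  destruct lamc_bounded_above as [U HU]. destruct lamc1_bounded_below as [Low HLow].
  exists t1, (Rabs U + Rabs Low + R0). split; [unfold t1; lra|]. intros t Ht i Hi.
  pose proof (Rabs_pos U). pose proof (Rabs_pos Low).
  destruct (rho_bounded t ltac:(unfold t1 in *; lra)) as [Hr1 Hr2].
  destruct i as [|i]; simpl sol_vec.
  - rewrite Rabs_right by lra. lra.
  - replace (lam (S i) t) with (lamc (S i) t) by (apply clamp0_eq; unfold t1 in *; lra).
    pose proof (HU (S i) ltac:(lia) t ltac:(lra)). pose proof (HLow t ltac:(lra)).
    pose proof (lamc_le 1 (S i) t ltac:(lia) ltac:(lia) (lam0_min (S i) ltac:(lia))
      ltac:(unfold t1 in *; lra)).
    pose proof (Rle_abs U). pose proof (Rle_abs (- Low)) as HL. rewrite Rabs_Ropp in HL.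
    apply Rabs_le. lra.
Qed.

End BoundedBelow.

End Solution.

Lemma uc1_not_bounded_below n k cb rho0 lam0 s lam rho : maximal_sol n k cb rho0 lam0 s lam rho ->
  (1 <= n)%nat -> 0 < s -> 0 < k -> 0 < cb -> 0 < rho0 ->
  (forall i, (1 <= i <= n)%nat -> lam0 1%nat <= lam0 i) ->
  forall t0 m, 0 < t0 < s -> 0 < m -> (forall t, t0 < t < s -> m <= uc lam 1 t) -> False.
Proof.
  intros Hmax Hn Hs Hk Hcb Hr0 Hord t0 m Ht0 Hm Hlow.
  destruct (sol_bounded_of_uc1_bounded_below n k cb rho0 lam0 s lam rho (proj1 Hmax) Hn Hs Hk Hcb Hr0
              Hord t0 m Ht0 Hm Hlow) as [t1 [K0 [Ht1 Hbd]]].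
  exact (maximal_sol_unbounded n k cb rho0 lam0 s lam rho t1 K0 Hn Ht1 Hmax Hbd).
Qed.

(** * Two positive solutions of [u'' = f u] with positive Wronskian *)

Section SecondOrder.

Variables (x dx y dy f : R -> R) (s a c : R).
Hypothesis s_pos : 0 < s.
Hypothesis a_pos : 0 < a.
Hypothesis c_pos : 0 < c.
Hypothesis x_derive : forall t, 0 < t < s -> is_derive x t (dx t).
Hypothesis y_derive : forall t, 0 < t < s -> is_derive y t (dy t).
Hypothesis dx_derive : forall t, 0 < t < s -> is_derive dx t (f t * x t).
Hypothesis dy_derive : forall t, 0 < t < s -> is_derive dy t (f t * y t).
Hypothesis x_pos : forall t, 0 < t < s -> 0 < x t.
Hypothesis y_pos : forall t, 0 < t < s -> 0 < y t.
Hypothesis f_lower : forall t, 0 < t < s -> - a < f t.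
Hypothesis wronskian : forall t, 0 < t < s -> x t * dy t - dx t * y t = c.
Hypothesis x_not_bounded_below :
  forall t0 m, 0 < t0 < s -> 0 < m -> (forall t, t0 < t < s -> m <= x t) -> False.

(* If [x' > 0] at a time [t2] closer to [s] than [1 / sqrt a], Sturm comparison keeps [x] above
   [x t2 * cos 1] up to [s]. *)
Lemma dx_eventually_nonpos : exists t1, 0 < t1 < s /\ forall t, t1 <= t < s -> dx t <= 0.
Proof.
  set (om := sqrt a). assert (Hom : 0 < om) by (apply sqrt_lt_R0, a_pos).
  assert (Hom2 : om * om = a) by (apply sqrt_sqrt; lra).
  set (d0 := Rmin (s / 2) (1 / (om + 1))).
  assert (Hd0 : 0 < d0) by (apply Rmin_pos; [lra | apply Rdiv_lt_0_compat; lra]).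
  assert (Hd0s : d0 <= s / 2) by apply Rmin_l.
  assert (Hd0o : om * d0 <= 1).
  { assert (d0 <= 1 / (om + 1)) by apply Rmin_r.
    assert (om * d0 <= om * (1 / (om + 1))) by (apply Rmult_le_compat_l; lra).
    assert (om * (1 / (om + 1)) <= 1) by (apply (Rmult_le_reg_r (om + 1)); [lra|]; field_simplify; lra).
    lra. }
  exists (s - d0 / 2). split; [lra|]. intros t2 Ht2.
  destruct (Rle_or_lt (dx t2) 0) as [H|H]; [exact H | exfalso].
  apply (x_not_bounded_below t2 (x t2 * cos 1)); [lra | |].
  - apply Rmult_lt_0_compat; [apply x_pos; lra | apply cos_gt_0; pose proof PI2_1; lra].
  - intros t Ht. apply (sturm_lower_bound x dx f om t2 t Hom); [lra | | | lra].
    + assert (om * (t - t2) <= om * d0) by (apply Rmult_le_compat_l; lra). lra.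
    + intros z Hz. rewrite Hom2.
      split; [apply x_derive; lra|]. split; [apply dx_derive; lra|].
      split; [apply x_pos; lra | apply Rlt_le, f_lower; lra].
Qed.

Section Tail.

Variable t1 : R.
Hypothesis t1_in : 0 < t1 < s.
Hypothesis dx_nonpos : forall t, t1 <= t < s -> dx t <= 0.

Lemma x_nonincreasing u v : t1 <= u <= v -> v < s -> x v <= x u.
Proof.
  intros Huv Hv. enough (- x u <= - x v) by lra.
  apply (nondecreasing_of_derive_closed (fun t => - x t) (fun t => - dx t) u v); [lra | |].
  - intros r Hr. apply (is_derive_opp x), x_derive. lra.
  - intros r Hr. pose proof (dx_nonpos r ltac:(lra)). lra.
Qed.

Lemma dx_bounded : exists Md, 1 <= Md /\ forall t, t1 <= t < s -> - Md <= dx t <= 0.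
Proof.
  pose proof (x_pos t1 t1_in).
  exists (Rabs (dx t1) + a * x t1 * s + 1). split.
  { pose proof (Rabs_pos (dx t1)). assert (0 <= a * x t1 * s) by (apply Rmult_le_pos;
      [apply Rmult_le_pos|]; lra).
    lra. }
  intros t Ht. split; [|apply dx_nonpos, Ht].
  assert (dx t1 + a * x t1 * t1 <= dx t + a * x t1 * t).
  { apply (nondecreasing_of_derive_closed (fun r => dx r + a * x t1 * r)
      (fun r => f r * x r + a * x t1)); [lra | |].
    - intros r Hr. apply is_derive_Rplus; [apply dx_derive; lra | apply is_derive_Rlin].
    - intros r Hr. pose proof (x_pos r ltac:(lra)). pose proof (f_lower r ltac:(lra)).
      pose proof (x_nonincreasing t1 r ltac:(lra) ltac:(lra)).
      assert (0 <= (f r + a) * x r) by (apply Rmult_le_pos; lra). nra. }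
  pose proof (Rle_abs (- dx t1)) as Habs. rewrite Rabs_Ropp in Habs.
  assert (a * x t1 * (t - t1) <= a * x t1 * s) by (apply Rmult_le_compat_l; [apply Rmult_le_pos|]; lra).
  nra.
Qed.

(* [inf x = 0] near [s] and [x' >= - Md], so [x] vanishes at least linearly at [s]. *)
Lemma x_le_linear : exists Md, 1 <= Md /\ forall t, t1 <= t < s -> x t <= Md * (s - t).
Proof.
  destruct dx_bounded as [Md [HMd Hdx]]. exists Md. split; [exact HMd|]. intros t Ht.
  apply Rle_plus_epsilon. intros eps He.
  assert (Hsmall : exists sg, (t + s) / 2 < sg < s /\ x sg < eps).
  { apply NNPP. intros Hn. apply (x_not_bounded_below ((t + s) / 2) eps); [lra | exact He|].
    intros z Hz. destruct (Rle_or_lt eps (x z)) as [Hle|Hlt]; [exact Hle|].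
    exfalso. apply Hn. exists z. split; assumption. }
  destruct Hsmall as [sg [Hsg Hxsg]].
  assert (Hl : Rabs (x sg - x t) <= Md * (sg - t)).
  { apply (abs_sub_le_of_derive_bound x dx); [lra | intros r Hr; apply x_derive; lra |].
    intros r Hr. destruct (Hdx r ltac:(lra)). apply Rabs_le. lra. }
  apply Rabs_le_between in Hl.
  assert (Md * (sg - t) <= Md * (s - t)) by (apply Rmult_le_compat_l; lra). lra.
Qed.

Lemma ratio_derive t : 0 < t < s -> is_derive (fun t => y t / x t) t (c / x t ^ 2).
Proof.
  intros Ht. pose proof (x_pos t Ht).
  apply (is_derive_eq _ _ _ _ (is_derive_div _ _ _ _ _ (y_derive t Ht) (x_derive t Ht) ltac:(lra))).
  rewrite <- (wronskian t Ht). field. lra.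
Qed.

(* [(y/x)' = c / x^2 >= c / (Md^2 (s - t)^2)], which is not integrable at [s]. *)
Lemma ratio_unbounded : forall B, exists t0, t1 <= t0 < s /\ forall t, t0 <= t < s -> B <= y t / x t.
Proof.
  destruct x_le_linear as [Md [HMd Hxb]].
  set (g := fun t => y t / x t).
  assert (Hglb : forall t, t1 <= t < s
      -> g t1 - c / (Md * Md * (s - t1)) + c / (Md * Md * (s - t)) <= g t).
  { intros t Ht.
    enough (g t1 - c / (Md * Md * (s - t1)) <= g t - c / (Md * Md * (s - t))) by lra.
    apply (nondecreasing_of_derive_closed (fun r => g r - c / (Md * Md * (s - r)))
             (fun r => c / x r ^ 2 - c / (Md * Md * (s - r) ^ 2)) t1 t); [lra | |].
    - intros r Hr. apply is_derive_Rminus; [apply ratio_derive; lra|].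
      assert (Md * Md * (s - r) <> 0) by (apply Rgt_not_eq, Rmult_gt_0_compat; [nra | lra]).
      auto_derive; [exact H | field; lra].
    - intros r Hr. pose proof (x_pos r ltac:(lra)). pose proof (Hxb r ltac:(lra)).
      assert (x r ^ 2 <= Md * Md * (s - r) ^ 2) by (simpl; nra).
      assert (/ (Md * Md * (s - r) ^ 2) <= / x r ^ 2) by (apply Rinv_le_contravar; [apply pow_lt|]; lra).
      unfold Rdiv. nra. }
  intros B. set (E := Rabs (B - g t1 + c / (Md * Md * (s - t1))) + 1).
  assert (HE : 0 < E) by (pose proof (Rabs_pos (B - g t1 + c / (Md * Md * (s - t1)))); unfold E; lra).
  set (r := c / (Md * Md * E)).
  assert (Hr : 0 < r) by (apply Rdiv_lt_0_compat; [lra | apply Rmult_lt_0_compat; nra]).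
  exists (Rmax t1 (s - r)). split; [split; [apply Rmax_l | apply Rmax_lub_lt; lra]|].
  intros t Ht. pose proof (Rmax_l t1 (s - r)). pose proof (Rmax_r t1 (s - r)).
  pose proof (Hglb t ltac:(lra)).
  assert (E <= c / (Md * Md * (s - t))).
  { assert (0 < Md * Md * (s - t)) by (apply Rmult_lt_0_compat; nra).
    assert (Md * Md * (s - t) <= Md * Md * r) by (apply Rmult_le_compat_l; nra).
    assert (Md * Md * r * E = c) by (unfold r; field; split; lra).
    apply (Rmult_le_reg_r (Md * Md * (s - t))); [assumption|].
    replace (c / (Md * Md * (s - t)) * (Md * Md * (s - t))) with c by (field; lra). nra. }
  pose proof (Rle_abs (B - g t1 + c / (Md * Md * (s - t1)))). unfold E in *. change (B <= g t). lra.
Qed.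

Lemma xy_bounded_above t : t1 <= t < s -> x t * y t <= x t1 * y t1 + c * s.
Proof.
  intros Ht. assert (c * t1 - x t1 * y t1 <= c * t - x t * y t).
  { apply (nondecreasing_of_derive_closed (fun r => c * r - x r * y r)
      (fun r => c - (dx r * y r + x r * dy r))); [lra | |].
    - intros r Hr. apply is_derive_Rminus; [apply is_derive_Rlin|].
      apply is_derive_Rmult; [apply x_derive | apply y_derive]; lra.
    - intros r Hr. pose proof (wronskian r ltac:(lra)). pose proof (dx_nonpos r ltac:(lra)).
      pose proof (y_pos r ltac:(lra)). assert (dx r * y r <= 0) by nra. lra. }
  assert (c * (t - t1) <= c * s) by (apply Rmult_le_compat_l; lra). lra.
Qed.

(* [x y'] cannot go below [min (x y')(t1) 0 - a H0 s]: where it is negative, [y' < 0] and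
   [(x y')' = x' y' + f x y >= - a H0] with [H0] the upper bound of [x y]. *)
Lemma dx_y_bounded : exists B, forall t, t1 <= t < s -> Rabs (dx t * y t) <= B.
Proof.
  set (H0 := x t1 * y t1 + c * s).
  assert (HH0 : 0 < H0).
  { pose proof (x_pos t1 t1_in). pose proof (y_pos t1 t1_in).
    assert (0 < x t1 * y t1) by (apply Rmult_lt_0_compat; assumption). unfold H0. nra. }
  set (m0 := Rmin (x t1 * dy t1) 0).
  assert (Hm0 : m0 <= 0) by apply Rmin_r.
  assert (Hxdy : forall t, t1 <= t < s -> m0 <= x t * dy t + a * H0 * (t - t1)).
  { intros t Ht. apply (lower_barrier (fun r => x r * dy r + a * H0 * (r - t1))
        (fun r => dx r * dy r + x r * (f r * y r) + a * H0) t1 t m0); [lra | | | | lra].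
    - intros r Hr. apply is_derive_Rplus.
      + apply is_derive_Rmult; [apply x_derive | apply dy_derive]; lra.
      + auto_derive; [trivial | ring].
    - intros r Hr Hlt. pose proof (x_pos r ltac:(lra)). pose proof (y_pos r ltac:(lra)).
      pose proof (f_lower r ltac:(lra)). pose proof (dx_nonpos r ltac:(lra)).
      pose proof (xy_bounded_above r ltac:(lra)) as Hxy. fold H0 in Hxy.
      assert (0 <= a * H0 * (r - t1)) by (apply Rmult_le_pos; [nra | lra]).
      assert (x r * dy r < 0) by lra.
      assert (dy r < 0) by (destruct (Rle_or_lt 0 (dy r)); [nra | assumption]).
      assert (0 <= dx r * dy r) by nra.
      assert (0 < x r * y r) by (apply Rmult_lt_0_compat; assumption).
      assert (0 <= (f r + a) * (x r * y r)) by (apply Rmult_le_pos; lra).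
      assert (0 <= a * (H0 - x r * y r)) by (apply Rmult_le_pos; lra).
      nra.
    - unfold m0. rewrite Rminus_diag, Rmult_0_r, Rplus_0_r. apply Rmin_l. }
  exists (Rabs m0 + a * H0 * s + c). intros t Ht.
  pose proof (Hxdy t Ht). pose proof (wronskian t ltac:(lra)). pose proof (dx_nonpos t Ht).
  pose proof (y_pos t ltac:(lra)). assert (dx t * y t <= 0) by nra.
  assert (a * H0 * (t - t1) <= a * H0 * s) by (apply Rmult_le_compat_l; [nra | lra]).
  pose proof (Rle_abs (- m0)) as Hm. rewrite Rabs_Ropp in Hm.
  apply Rabs_le. pose proof (Rabs_pos m0). nra.
Qed.

(* For [te <= t], [x t^2 ((y/x)(t) - (y/x)(te)) <= c (t - te)] because [x] is nonincreasing; once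
   [(y/x)(t) >= 2 (y/x)(te)], this bounds [x t y t = x t^2 (y/x)(t)] by [2 c (s - te)]. *)
Lemma xy_vanishes : forall eps, 0 < eps -> exists tau, t1 <= tau < s /\ forall t, tau < t < s
    -> x t * y t < eps.
Proof.
  intros eps He. set (g := fun t => y t / x t).
  set (te := Rmax t1 (s - eps / (4 * c))).
  assert (Hte : t1 <= te < s /\ s - eps / (4 * c) <= te).
  { assert (0 < eps / (4 * c)) by (apply Rdiv_lt_0_compat; lra).
    unfold te. split; [split; [apply Rmax_l | apply Rmax_lub_lt; lra] | apply Rmax_r]. }
  assert (Hgte : 0 < g te) by (apply Rdiv_lt_0_compat; [apply y_pos | apply x_pos]; lra).
  destruct (ratio_unbounded (2 * g te)) as [t0 [Ht0 Hg0]].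
  exists (Rmax t0 te). split; [split; [pose proof (Rmax_r t0 te); lra | apply Rmax_lub_lt; lra]|].
  intros t Ht. pose proof (Rmax_l t0 te). pose proof (Rmax_r t0 te).
  pose proof (x_pos t ltac:(lra)). pose proof (Hg0 t ltac:(lra)) as Hgt. change (2 * g te <= g t) in Hgt.
  assert (Hmono : te - x t ^ 2 / c * g te <= t - x t ^ 2 / c * g t).
  { apply (nondecreasing_of_derive_closed (fun r => r - x t ^ 2 / c * g r)
      (fun r => 1 - x t ^ 2 / c * (c / x r ^ 2)) te t); [lra | |].
    - intros r Hr. apply is_derive_Rminus; [apply is_derive_Rid|].
      apply (is_derive_scal g), ratio_derive. lra.
    - intros r Hr. pose proof (x_pos r ltac:(lra)). pose proof (x_nonincreasing r t ltac:(lra)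
        ltac:(lra)).
      replace (x t ^ 2 / c * (c / x r ^ 2)) with (x t ^ 2 / x r ^ 2) by (field; lra).
      assert (x t ^ 2 <= x r ^ 2) by (simpl; nra).
      assert (x t ^ 2 / x r ^ 2 <= 1) by (apply (Rmult_le_reg_r (x r ^ 2)); [apply pow_lt; lra |
          field_simplify; lra]).
      lra. }
  assert (Hxy : x t * y t = x t ^ 2 * g t) by (unfold g; field; lra).
  assert (Hd : x t ^ 2 * (g t - g te) <= eps / 4).
  { apply (Rmult_le_reg_r (/ c)); [apply Rinv_0_lt_compat, c_pos|].
    replace (x t ^ 2 * (g t - g te) * / c) with (x t ^ 2 / c * (g t - g te)) by (field; lra).
    replace (eps / 4 * / c) with (eps / (4 * c)) by (field; lra). lra. }
  assert (0 <= x t ^ 2) by (apply pow_le; lra).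
  assert (x t ^ 2 * (g t / 2) <= x t ^ 2 * (g t - g te)) by (apply Rmult_le_compat_l; lra).
  rewrite Hxy. lra.
Qed.

End Tail.

Theorem second_order_tail : exists t1, 0 < t1 < s /\
  (exists B, forall t, t1 <= t < s -> Rabs (dx t * y t) <= B) /\
  (forall eps, 0 < eps -> exists tau, t1 <= tau < s /\ forall t, tau < t < s -> x t * y t < eps).
Proof.
  destruct dx_eventually_nonpos as [t1 [Ht1 Hdx]].
  exists t1. split; [exact Ht1|]. split.
  - exact (dx_y_bounded t1 Ht1 Hdx).
  - exact (xy_vanishes t1 Ht1 Hdx).
Qed.

End SecondOrder.

Lemma lam0_ordered (n J : nat) (lam0 : nat -> R) : (1 <= J <= n)%nat ->
  (forall i, (1 <= i <= J)%nat -> lam0 i = lam0 1%nat) ->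
  ((J < n)%nat -> lam0 J < lam0 (S J)) ->
  (forall i, (J < i < n)%nat -> lam0 i <= lam0 (S i)) ->
  (forall i, (J < i <= n)%nat -> lam0 1%nat < lam0 i) /\ (forall i, (1 <= i <= n)%nat
      -> lam0 1%nat <= lam0 i).
Proof.
  intros HJ Heq Hgap Hmono.
  assert (Hchain : forall m, (J + 1 + m <= n)%nat -> lam0 (J + 1)%nat <= lam0 (J + 1 + m)%nat).
  { induction m as [|m IH]; intros Hm; [rewrite Nat.add_0_r; lra|].
    eapply Rle_trans; [apply IH; lia|]. replace (J + 1 + S m)%nat with (S (J + 1 + m)) by lia.
    apply Hmono. lia. }
  assert (Hgt : forall i, (J < i <= n)%nat -> lam0 1%nat < lam0 i).
  { intros i Hi. rewrite <- (Heq J) by lia. eapply Rlt_le_trans; [apply Hgap; lia|].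
    replace (S J) with (J + 1)%nat by lia. replace i with (J + 1 + (i - J - 1))%nat by lia.
    apply Hchain. lia. }
  split; [exact Hgt|]. intros i Hi. destruct (Nat.le_gt_cases i J).
  - rewrite (Heq i) by lia. lra.
  - left. apply Hgt. lia.
Qed.

Lemma bounded_on_of_tail (Y : R -> R) t1 tB : 0 < t1 < tB ->
  (forall t, 0 <= t <= t1 -> continuous Y t) -> (exists B, forall t, t1 <= t < tB -> Rabs (Y t) <= B) ->
  bounded_on_0_tB tB Y.
Proof.
  intros Ht1 Hc [B HB].
  destruct (continuity_ab_maj (fun t => Rabs (Y t)) 0 t1) as [tm [Htm _]]; [lra | |].
  { intros t Ht. apply continuity_pt_filterlim, (continuous_comp Y Rabs); [apply Hc, Ht
      | apply continuous_Rabs]. }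
  exists (B + Rabs (Y tm)). intros t Ht. pose proof (Rabs_pos (Y tm)).
  pose proof (HB t1 ltac:(lra)). pose proof (Rabs_pos (Y t1)).
  destruct (Rle_or_lt t t1) as [Hle|Hlt]; [pose proof (Htm t ltac:(lra)); lra
      | pose proof (HB t ltac:(lra)); lra].
Qed.

Lemma bounded_on_0_tB_ext (g Y : R -> R) tB : (forall t, 0 < t < tB -> g t = Y t) ->
  bounded_on_0_tB tB Y -> bounded_on_0_tB tB g.
Proof.
  intros Heq [B HB]. exists (B + Rabs (g 0)). intros t Ht. pose proof (Rabs_pos (g 0)).
  destruct (Req_dec t 0) as [->|Hne].
  - pose proof (HB 0 Ht). pose proof (Rabs_pos (Y 0)). lra.
  - rewrite Heq by lra. pose proof (HB t Ht). lra.
Qed.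

Lemma filterlim_at_left_0 (g : R -> R) s :
  (forall eps, 0 < eps -> exists tau, tau < s /\ forall t, tau < t < s -> 0 <= g t < eps) ->
  filterlim g (at_left s) (locally 0).
Proof.
  intros Hsmall. apply filterlim_locally. intros eps.
  destruct (Hsmall eps (cond_pos eps)) as [tau [Htau Hg]].
  exists (mkposreal (s - tau) ltac:(lra)). intros t Ht Hts.
  change (Rabs (t - s) < s - tau) in Ht. apply Rabs_def2 in Ht.
  change (Rabs (g t - 0) < eps). rewrite Rminus_0_r.
  destruct (Hg t ltac:(lra)). rewrite Rabs_right by lra. assumption.
Qed.

Lemma uc_pair_tail n k cb rho0 lam0 s lam rho j : maximal_sol n k cb rho0 lam0 s lam rho ->
  (1 <= n)%nat -> 0 < s -> 0 < k -> 0 < cb -> 0 < rho0 ->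
  (forall i, (1 <= i <= n)%nat -> lam0 1%nat <= lam0 i) -> (1 <= j <= n)%nat -> lam0 1%nat < lam0 j ->
  exists t1, 0 < t1 < s /\
    (exists B, forall t, t1 <= t < s -> Rabs (clamp0 (lam 1%nat) t * uc lam 1 t * uc lam j t) <= B) /\
    (forall eps, 0 < eps -> exists tau, t1 <= tau < s /\ forall t, tau < t < s
        -> uc lam 1 t * uc lam j t < eps).
Proof.
  intros Hmax Hn Hs Hk Hcb Hr0 Hord Hj Hgt. pose proof (proj1 Hmax) as Hsol.
  assert (H1 : (1 <= 1 <= n)%nat) by lia.
  assert (Hkn : 0 < k / INR n) by (apply Rdiv_lt_0_compat; [exact Hk | apply lt_0_INR; lia]).
  set (du := fun i t => clamp0 (lam i) t * uc lam i t).
  assert (Hu : forall i, (1 <= i <= n)%nat -> forall t, 0 < t < s -> is_derive (uc lam i) t (du i t))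
    by (intros i Hi t Ht; apply (uc_derive n k cb rho0 lam0 s lam rho Hsol Hs); [exact Hi | lra]).
  assert (Hdu : forall i, (1 <= i <= n)%nat -> forall t, 0 < t < s ->
                  is_derive (du i) t (k / INR n * (rho t - cb) * uc lam i t))
    by (intros i Hi t Ht; apply (duc_derive n k cb rho0 lam0 s lam rho Hsol Hs); assumption).
  assert (Hf : forall t, 0 < t < s -> - (k / INR n * cb) < k / INR n * (rho t - cb)).
  { intros t Ht. pose proof (rho_pos n k cb rho0 lam0 s lam rho Hsol Hn Hs Hr0 t ltac:(lra)). nra. }
  assert (HW : forall t, 0 < t < s
      -> uc lam 1 t * du j t - du 1%nat t * uc lam j t = lam0 j - lam0 1%nat).
  { intros t Ht. unfold du.
    rewrite <- (wronskian_constant n k cb rho0 lam0 s lam rho Hsol Hs 1 j t H1 Hj ltac:(lra)). ring. }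
  exact (second_order_tail (uc lam 1) (du 1%nat) (uc lam j) (du j) (fun t => k / INR n * (rho t - cb))
           s (k / INR n * cb) (lam0 j - lam0 1%nat) Hs ltac:(nra) ltac:(lra)
           (Hu 1%nat H1) (Hu j Hj) (Hdu 1%nat H1) (Hdu j Hj)
           (fun t _ => uc_pos lam 1 t) (fun t _ => uc_pos lam j t) Hf HW
           (uc1_not_bounded_below n k cb rho0 lam0 s lam rho Hmax Hn Hs Hk Hcb Hr0 Hord)).
Qed.

Theorem corollary3p3 (n J : nat) (k cb rho0 tB : R) (lam0 : nat -> R)
    (lam : nat -> R -> R) (rho : R -> R) :
  (2 <= n)%nat -> 0 < k -> 0 < cb -> 0 < rho0 ->
  (1 <= J <= n)%nat ->
  (forall i, (1 <= i <= J)%nat -> lam0 i = lam0 1%nat) ->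
  ((J < n)%nat -> lam0 J < lam0 (S J)) ->
  (forall i, (J < i < n)%nat -> lam0 i <= lam0 (S i)) ->
  0 < tB ->
  maximal_sol n k cb rho0 lam0 tB lam rho ->
  forall j, (J < j <= n)%nat ->
    bounded_on_0_tB tB (fun t => Derive (u lam 1%nat) t * u lam j t) /\
    bounded_on_0_tB tB (fun t => u lam 1%nat t * Derive (u lam j) t) /\
    filterlim (fun t => u lam 1%nat t * u lam j t) (at_left tB) (locally 0).
Proof.
  intros Hn Hk Hcb Hr0 HJ Heq Hgap Hmono HtB Hmax j Hj.
  destruct (lam0_ordered n J lam0 HJ Heq Hgap Hmono) as [Hgt Hord].
  assert (Hn1 : (1 <= n)%nat) by lia.
  assert (H1 : (1 <= 1 <= n)%nat) by lia.
  assert (Hj1 : (1 <= j <= n)%nat) by lia.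
  pose proof (proj1 Hmax) as Hsol.
  destruct (uc_pair_tail n k cb rho0 lam0 tB lam rho j Hmax Hn1 HtB Hk Hcb Hr0 Hord Hj1 (Hgt j Hj))
    as [t1 [Ht1 [[B HB] Hsmall]]].
  set (Y := fun t => clamp0 (lam 1%nat) t * uc lam 1 t * uc lam j t).
  assert (HYc : forall t, 0 <= t <= t1 -> continuous Y t)
    by (intros t Ht; apply (lamc_uc_uc_continuous n k cb rho0 lam0 tB lam rho Hsol HtB);
        (assumption || lra)).
  split; [|split].
  - apply (bounded_on_0_tB_ext _ Y).
    { intros t Ht. exact (Derive_u_mul_u n k cb rho0 lam0 tB lam rho Hsol HtB 1%nat j t H1 Ht). }
    apply (bounded_on_of_tail Y t1 tB Ht1 HYc). exists B. exact HB.
  - apply (bounded_on_0_tB_ext _ (fun t => Y t + (lam0 j - lam0 1%nat))).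
    { intros t Ht. exact (u_mul_Derive_u n k cb rho0 lam0 tB lam rho Hsol HtB 1%nat j t H1 Hj1 Ht). }
    apply (bounded_on_of_tail _ t1 tB Ht1).
    { intros t Ht. apply (continuous_plus Y); [apply HYc, Ht | apply continuous_const]. }
    exists (B + Rabs (lam0 j - lam0 1%nat)). intros t Ht. pose proof (HB t Ht).
    eapply Rle_trans; [apply Rabs_triang | unfold Y; lra].
  - apply filterlim_at_left_0. intros eps Heps. destruct (Hsmall eps Heps) as [tau [Htau Hxy]].
    exists tau. split; [lra|]. intros t Ht. rewrite !u_eq_uc by lra.
    split; [apply Rmult_le_pos; left; apply uc_pos | apply Hxy, Ht].
Qed.
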